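(* Let $A$ be a Lagrange tensor along $c$ with base point $t_0$ and fix $v\in E_{t_0}$. (a) The vector field $t\mapsto A_t^{-*}v$ is smooth on the set of regular points. If $t^*$ is a singular point, then $A_t^{-*}v$ has a smooth extension across $t=t^*$ if and only if $v$ is orthogonal to $\ker A_{t^*}$. (b) For $v\neq0$, the function $g_v$ extends continuously to all $t$ (with $g_v(t^* )=0$ at singular points $t^*$ with $v\not\perp\ker A_{t^*}$, where $\|A_t^{-*}v\|\to\infty$), and $g_v(t)>0$ if and only if $v$ is orthogonal to $\ker A_t$.
   Context: Setting: $(M^{n+1},g)$ is a Riemannian manifold and $c:I\to M$ a unit-speed geodesic on an interval $I$. For $t\in I$ let $E_t=\dot c(t)^\perp\subset T_{c(t)}M$ and let $R_t:E_t\to E_t$, $R_t(x)=R(x,\dot c(t))\dot c(t)$. For a vector field $X$ along $c$, $X'$ denotes $\nabla_{\dot c}X$. Fix a base point $t_0\in I$. A Jacobi tensor is a smooth family of linear maps $A_t:E_{t_0}\to E_t$ with $A_t''+R_tA_t=0$. It is a Lagrange tensor if $\ker A_{t_0}\cap\ker A'_{t_0}=0$ and $\langle A_t'v,A_tw\rangle=\langle A_tv,A_t'w\rangle$ for all $t$ and all $v,w\in E_{t_0}$. A point $t$ is regular if $A_t$ is invertible and singular otherwise. $A_t^*:E_t\to E_{t_0}$ is the adjoint of $A_t$ and $A_t^{-*}=(A_t^* )^{-1}$ (at regular $t$). For $0\ne v\in E_{t_0}$, $g_v(t)=\|v\|^2/\|A_t^{-*}v\|$ at regular $t$. *)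

(* classical reals.  Everything is expressed in a parallel
   orthonormal frame along the geodesic c. *)
From Stdlib Require Import Reals Lra List.
Open Scope R_scope.

Definition sumR (n : nat) (f : nat -> R) : R :=
  fold_right Rplus 0 (map f (seq 0 n)).

(* vectors of R^n and n x n matrices; only indices < n are meaningful *)
Definition Vec := nat -> R.
Definition Mat := nat -> nat -> R.

Definition mv (n : nat) (M : Mat) (x : Vec) : Vec :=
  fun i => sumR n (fun k => M i k * x k).
Definition mm (n : nat) (M N : Mat) : Mat :=
  fun i j => sumR n (fun k => M i k * N k j).
Definition tr (M : Mat) : Mat := fun i j => M j i.
Definition idm : Mat := fun i j => if Nat.eqb i j then 1 else 0.

Definition dot (n : nat) (x y : Vec) : R := sumR n (fun i => x i * y i).
Definition vnorm (n : nat) (x : Vec) : R := sqrt (dot n x x).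

Definition invertible (n : nat) (M : Mat) : Prop :=
  exists B : Mat, forall i j, (i < n)%nat -> (j < n)%nat ->
    mm n B M i j = idm i j /\ mm n M B i j = idm i j.

Definition in_ker (n : nat) (M : Mat) (x : Vec) : Prop :=
  forall i, (i < n)%nat -> mv n M x i = 0.

Definition perp_ker (n : nat) (M : Mat) (v : Vec) : Prop :=
  forall x, in_ker n M x -> dot n v x = 0.

(* w = M^{-*} v, i.e. M^* w = v (M^* = transpose in orthonormal frames) *)
Definition is_invstar (n : nat) (M : Mat) (v w : Vec) : Prop :=
  forall i, (i < n)%nat -> mv n (tr M) w i = v i.

Definition is_open_interval (I : R -> Prop) : Prop :=
  (forall x y z, I x -> I z -> x <= y <= z -> I y) /\
  (forall x, I x -> exists e, 0 < e /\ forall y, Rabs (y - x) < e -> I y).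

Definition smooth_on (D : R -> Prop) (f : R -> R) : Prop :=
  exists F : nat -> R -> R,
    (forall t, D t -> F O t = f t) /\
    (forall k t, D t -> derivable_pt_lim (F k) t (F (S k) t)).

(* Near any [ts] the Jacobi tensor factors as [A t = B t D t], where [D t] acts as
   [t - ts] on [ker A(ts)] and as the identity on a complement, and [B] is smooth:
   Hadamard's lemma writes [A t P = (t - ts) H t] for a projector [P] onto
   [ker A(ts)], and [B = A (1 - P) + H]. Since [H ts = A'(ts) P], the Lagrange
   condition together with [ker A t /\ ker A' t = 0] (propagated from [t0] by
   uniqueness for the Jacobi equation) makes [B ts] invertible. So singular points
   are isolated, and for [t <> ts] near [ts]
     [B(t)^* A(t)^{-*} v = v - P^* v + P^* v / (t - ts)].
   Hence [A^{-*} v] extends smoothly across [ts] iff [P^* v = 0], i.e. iff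
   [v] is orthogonal to [ker A(ts)]; otherwise it blows up like [1 / |t - ts|]
   and [g_v] tends to [0]. Away from singular points everything is Cramer's rule. *)

From Stdlib Require Import Reals Lra Lia List FunctionalExtensionality ClassicalEpsilon.
From Coquelicot Require Import Coquelicot.
Open Scope R_scope.

Lemma sumR_O f : sumR 0 f = 0.
Proof. reflexivity. Qed.

Lemma sumR_S n f : sumR (S n) f = sumR n f + f n.
Proof.
  unfold sumR. rewrite seq_S, map_app, fold_right_app. simpl.
  induction (map f (seq 0 n)) as [|a l IH]; simpl; [ring|]. rewrite IH. ring.
Qed.

Lemma sumR_ext n f g : (forall k, (k < n)%nat -> f k = g k) -> sumR n f = sumR n g.
Proof.
  induction n as [|n IH]; intros H; [reflexivity|]. rewrite !sumR_S, IH, (H n) by auto; auto.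
Qed.

Lemma sumR_plus n f g : sumR n (fun k => f k + g k) = sumR n f + sumR n g.
Proof. induction n; [rewrite !sumR_O; ring|]. rewrite !sumR_S, IHn. ring. Qed.

Lemma sumR_opp n f : sumR n (fun k => - f k) = - sumR n f.
Proof. induction n; [rewrite !sumR_O; ring|]. rewrite !sumR_S, IHn. ring. Qed.

Lemma sumR_scal_l n c f : sumR n (fun k => c * f k) = c * sumR n f.
Proof. induction n; [rewrite !sumR_O; ring|]. rewrite !sumR_S, IHn. ring. Qed.

Lemma sumR_scal_r n c f : sumR n (fun k => f k * c) = sumR n f * c.
Proof. induction n; [rewrite !sumR_O; ring|]. rewrite !sumR_S, IHn. ring. Qed.

Lemma sumR_eq0 n f : (forall k, (k < n)%nat -> f k = 0) -> sumR n f = 0.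
Proof.
  intros H. rewrite (sumR_ext n f (fun _ => 0)) by auto.
  induction n; [reflexivity|]. rewrite sumR_S, IHn by auto. ring.
Qed.

Lemma sumR_swap n m (f : nat -> nat -> R) :
  sumR n (fun i => sumR m (fun j => f i j)) = sumR m (fun j => sumR n (fun i => f i j)).
Proof.
  induction n as [|n IH].
  - rewrite sumR_O, sumR_eq0; reflexivity.
  - rewrite sumR_S, IH, <- sumR_plus. apply sumR_ext. intros. rewrite sumR_S. reflexivity.
Qed.

Lemma sumR_le n f g : (forall k, (k < n)%nat -> f k <= g k) -> sumR n f <= sumR n g.
Proof.
  induction n as [|n IH]; intros H; [rewrite !sumR_O; lra|]. rewrite !sumR_S.
  apply Rplus_le_compat; [apply IH; auto|apply H; lia].
Qed.

Lemma sumR_ge0 n f : (forall k, (k < n)%nat -> 0 <= f k) -> 0 <= sumR n f.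
Proof. intros H. rewrite <- (sumR_eq0 n (fun _ => 0)) by auto. apply sumR_le, H. Qed.

Lemma sumR_abs n f : Rabs (sumR n f) <= sumR n (fun k => Rabs (f k)).
Proof.
  induction n; [rewrite !sumR_O, Rabs_R0; lra|]. rewrite !sumR_S.
  eapply Rle_trans; [apply Rabs_triang|]. lra.
Qed.

Lemma sumR_single n f j : (j < n)%nat -> (forall k, (k < n)%nat -> k <> j -> f k = 0) ->
  sumR n f = f j.
Proof.
  induction n as [|n IH]; intros Hj H; [lia|]. rewrite sumR_S.
  destruct (Nat.eq_dec j n) as [->|Hne].
  - rewrite sumR_eq0 by (intros; apply H; lia). ring.
  - rewrite IH, (H n) by (lia || (intros; apply H; lia)). ring.
Qed.

Lemma sumR_term_le n f j : (j < n)%nat -> (forall k, (k < n)%nat -> 0 <= f k) ->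
  f j <= sumR n f.
Proof.
  induction n as [|n IH]; intros Hj H; [lia|]. rewrite sumR_S.
  assert (0 <= f n) by (apply H; lia).
  destruct (Nat.eq_dec j n) as [->|Hne].
  - assert (0 <= sumR n f) by (apply sumR_ge0; intros; apply H; lia). lra.
  - assert (f j <= sumR n f) by (apply IH; [lia|intros; apply H; lia]). lra.
Qed.

Lemma sumR_ge0_eq0 n f : (forall k, (k < n)%nat -> 0 <= f k) -> sumR n f = 0 ->
  forall k, (k < n)%nat -> f k = 0.
Proof.
  intros H Hs k Hk. pose proof (sumR_term_le n f k Hk H). specialize (H k Hk). lra.
Qed.

Lemma sumR_idm_l n f j : (j < n)%nat -> sumR n (fun k => idm j k * f k) = f j.
Proof.
  intros Hj. rewrite (sumR_single n _ j Hj).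
  - unfold idm. rewrite Nat.eqb_refl. ring.
  - intros k _ Hk. unfold idm. destruct (Nat.eqb_spec j k); [lia|ring].
Qed.

Lemma sumR_idm_r n f j : (j < n)%nat -> sumR n (fun k => f k * idm k j) = f j.
Proof.
  intros Hj. rewrite <- (sumR_idm_l n f j Hj). apply sumR_ext. intros k _.
  unfold idm. rewrite Nat.eqb_sym. ring.
Qed.

Lemma mv_ext n M x x' : (forall i, (i < n)%nat -> x i = x' i) -> forall i, mv n M x i = mv n M x' i.
Proof. intros H i. apply sumR_ext. intros. rewrite H; auto. Qed.

Lemma mm_ext_l n M M' N i j : (forall a b, (a < n)%nat -> (b < n)%nat -> M a b = M' a b) ->
  (i < n)%nat -> mm n M N i j = mm n M' N i j.
Proof. intros H Hi. apply sumR_ext. intros. rewrite H; auto. Qed.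

Lemma mm_ext_r n M N N' i j : (forall a b, (a < n)%nat -> (b < n)%nat -> N a b = N' a b) ->
  (j < n)%nat -> mm n M N i j = mm n M N' i j.
Proof. intros H Hj. apply sumR_ext. intros. rewrite H; auto. Qed.

Lemma mv_mm n M N x i : mv n (mm n M N) x i = mv n M (mv n N x) i.
Proof.
  unfold mv, mm. rewrite (sumR_ext n _ (fun k => sumR n (fun l => M i l * N l k * x k))).
  2:{ intros. rewrite <- sumR_scal_r. reflexivity. }
  rewrite sumR_swap. apply sumR_ext. intros. rewrite <- sumR_scal_l. apply sumR_ext. intros; ring.
Qed.

Lemma mm_assoc n M N P i j : mm n (mm n M N) P i j = mm n M (mm n N P) i j.
Proof.
  unfold mm. rewrite (sumR_ext n _ (fun k => sumR n (fun l => M i l * N l k * P k j))).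
  2:{ intros. rewrite <- sumR_scal_r. reflexivity. }
  rewrite sumR_swap. apply sumR_ext. intros. rewrite <- sumR_scal_l. apply sumR_ext. intros; ring.
Qed.

Lemma mm_tr n M N i j : mm n (tr N) (tr M) i j = mm n M N j i.
Proof. apply sumR_ext. intros; unfold tr; ring. Qed.

Lemma mm_idm_r n M i j : (j < n)%nat -> mm n M idm i j = M i j.
Proof. apply sumR_idm_r. Qed.

Lemma mv_idm n x i : (i < n)%nat -> mv n idm x i = x i.
Proof. apply sumR_idm_l. Qed.

Lemma mm_plus_l n X Y Z i j :
  mm n (fun i j => X i j + Y i j) Z i j = mm n X Z i j + mm n Y Z i j.
Proof. unfold mm. rewrite <- sumR_plus. apply sumR_ext; intros; ring. Qed.

Lemma mm_plus_r n X Y Z i j :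
  mm n X (fun i j => Y i j + Z i j) i j = mm n X Y i j + mm n X Z i j.
Proof. unfold mm. rewrite <- sumR_plus. apply sumR_ext; intros; ring. Qed.

Lemma mm_minus_r n X Y Z i j :
  mm n X (fun i j => Y i j - Z i j) i j = mm n X Y i j - mm n X Z i j.
Proof. unfold mm, Rminus. rewrite <- sumR_opp, <- sumR_plus. apply sumR_ext; intros; ring. Qed.

Lemma mm_scal_l n X Y s i j : mm n (fun i j => s * X i j) Y i j = s * mm n X Y i j.
Proof. unfold mm. rewrite <- sumR_scal_l. apply sumR_ext; intros; ring. Qed.

Lemma mm_scal_r n X Y s i j : mm n X (fun i j => s * Y i j) i j = s * mm n X Y i j.
Proof. unfold mm. rewrite <- sumR_scal_l. apply sumR_ext; intros; ring. Qed.

Lemma mm_eq0_r n X Y i j : (forall a b, (a < n)%nat -> (b < n)%nat -> Y a b = 0) ->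
  (j < n)%nat -> mm n X Y i j = 0.
Proof. intros H Hj. apply sumR_eq0. intros. rewrite H; auto; ring. Qed.

Lemma mv_factor n (M N K : Mat) x i : (i < n)%nat ->
  (forall i j, (i < n)%nat -> (j < n)%nat -> M i j = mm n N K i j) ->
  mv n M x i = mv n N (mv n K x) i.
Proof. intros Hi H. rewrite <- mv_mm. apply sumR_ext. intros k Hk. rewrite H; auto. Qed.

Lemma mv_tr_factor n (M N K : Mat) w j : (j < n)%nat ->
  (forall i j, (i < n)%nat -> (j < n)%nat -> M i j = mm n N K i j) ->
  mv n (tr M) w j = mv n (tr K) (mv n (tr N) w) j.
Proof.
  intros Hj H. rewrite <- mv_mm. apply sumR_ext. intros k Hk. unfold tr at 1.
  rewrite H, <- mm_tr; auto.
Qed.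

Lemma dot_sym n x y : dot n x y = dot n y x.
Proof. apply sumR_ext. intros; ring. Qed.

Lemma dot_ext n x x' y y' : (forall i, (i < n)%nat -> x i = x' i) ->
  (forall i, (i < n)%nat -> y i = y' i) -> dot n x y = dot n x' y'.
Proof. intros H1 H2. apply sumR_ext. intros. rewrite H1, H2; auto. Qed.

Lemma dot_tr n M x y : dot n (mv n M x) y = dot n x (mv n (tr M) y).
Proof.
  unfold dot, mv, tr. rewrite (sumR_ext n _ (fun i => sumR n (fun k => M i k * x k * y i))).
  2:{ intros. rewrite <- sumR_scal_r. reflexivity. }
  rewrite sumR_swap. apply sumR_ext. intros. rewrite <- sumR_scal_l. apply sumR_ext. intros; ring.
Qed.

Lemma dot_opp_l n x z : dot n (fun i => - x i) z = - dot n x z.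
Proof. unfold dot. rewrite <- sumR_opp. apply sumR_ext. intros; ring. Qed.

Lemma dot_eq0_l n x z : (forall i, (i < n)%nat -> x i = 0) -> dot n x z = 0.
Proof. intros H. apply sumR_eq0. intros. rewrite H; auto; ring. Qed.

Lemma dot_self_ge0 n x : 0 <= dot n x x.
Proof. apply sumR_ge0. intros. nra. Qed.

Lemma dot_self_eq0 n x : dot n x x = 0 -> forall i, (i < n)%nat -> x i = 0.
Proof.
  intros H i Hi. assert (x i * x i = 0) by (apply (sumR_ge0_eq0 n (fun i => x i * x i)); auto; intros; nra).
  nra.
Qed.

Lemma in_ker_invertible n M x : invertible n M -> in_ker n M x -> forall i, (i < n)%nat -> x i = 0.
Proof.
  intros [B HB] Hx i Hi. rewrite <- (mv_idm n x i Hi).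
  rewrite (mv_factor n idm B M) by (auto; intros; symmetry; apply HB; auto).
  apply sumR_eq0. intros k Hk. rewrite Hx; auto; ring.
Qed.

Lemma invstar_nonzero n M v w : (exists i, (i < n)%nat /\ v i <> 0) ->
  is_invstar n M v w -> exists i, (i < n)%nat /\ w i <> 0.
Proof.
  intros [j [Hj Hv]] Hw. apply Classical_Prop.NNPP. intros Hno. apply Hv. rewrite <- (Hw j Hj).
  apply sumR_eq0. intros k Hk. destruct (Req_dec (w k) 0) as [E|E].
  - rewrite E; ring.
  - exfalso; apply Hno; exists k; auto.
Qed.

Lemma vnorm_ge0 n x : 0 <= vnorm n x.
Proof. apply sqrt_pos. Qed.

Lemma vnorm_ext n x y : (forall i, (i < n)%nat -> x i = y i) -> vnorm n x = vnorm n y.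
Proof. intros H. unfold vnorm. f_equal. apply dot_ext; auto. Qed.

Lemma vnorm_gt0 n x : (exists i, (i < n)%nat /\ x i <> 0) -> 0 < vnorm n x.
Proof.
  intros [i [Hi Hx]]. apply sqrt_lt_R0.
  destruct (dot_self_ge0 n x) as [H|H]; auto. exfalso. apply Hx. apply (dot_self_eq0 n x); auto.
Qed.

Lemma Rabs_coord_le_vnorm n x i : (i < n)%nat -> Rabs (x i) <= vnorm n x.
Proof.
  intros Hi. unfold vnorm. rewrite <- sqrt_Rsqr_abs. apply sqrt_le_1_alt.
  apply (sumR_term_le n (fun i => x i * x i) i); auto. intros; nra.
Qed.

Lemma Rabs_lincomb_le n (c : nat -> R) (w : Vec) :
  Rabs (sumR n (fun k => c k * w k)) <= sumR n (fun k => Rabs (c k)) * vnorm n w.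
Proof.
  eapply Rle_trans; [apply sumR_abs|]. rewrite <- sumR_scal_r. apply sumR_le. intros k Hk.
  rewrite Rabs_mult. apply Rmult_le_compat_l; [apply Rabs_pos|]. apply Rabs_coord_le_vnorm; auto.
Qed.

Definition Ropen (D : R -> Prop) : Prop :=
  forall x, D x -> exists e, 0 < e /\ forall y, Rabs (y - x) < e -> D y.

(* Unlike [smooth_on], the 0-th function of the sequence is [f] itself, so no
   restriction to [D] is needed when combining smooth functions pointwise. *)
Definition smooth (D : R -> Prop) (f : R -> R) : Prop :=
  exists F : nat -> R -> R, F O = f /\ forall k t, D t -> derivable_pt_lim (F k) t (F (S k) t).

Lemma derivable_pt_lim_eq f x l l' : derivable_pt_lim f x l -> l = l' -> derivable_pt_lim f x l'.
Proof. intros H ->; exact H. Qed.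

Lemma derivable_pt_lim_ext_loc f g x l e : 0 < e -> (forall y, Rabs (y - x) < e -> f y = g y) ->
  derivable_pt_lim f x l -> derivable_pt_lim g x l.
Proof.
  intros He Hfg H. apply is_derive_Reals. apply is_derive_Reals in H.
  apply (is_derive_ext_loc f g); auto. exists (mkposreal e He). intros y Hy. apply Hfg, Hy.
Qed.

Lemma smooth_on_of_smooth D f g : smooth D g -> (forall t, D t -> f t = g t) -> smooth_on D f.
Proof. intros [F [H0 H]] E. exists F. split; auto. intros t Ht. rewrite E, H0; auto. Qed.

Lemma smooth_of_smooth_on D f : Ropen D -> smooth_on D f -> smooth D f.
Proof.
  intros Ho [F [H0 H]]. exists (fun k => match k with O => f | S _ => F k end). split; auto.
  intros [|k] t Ht; [|apply H; auto].
  destruct (Ho t Ht) as [e [He He']]. apply (derivable_pt_lim_ext_loc (F O) f t _ e He); auto.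
Qed.

Lemma smooth_subset D D' f : smooth D f -> (forall t, D' t -> D t) -> smooth D' f.
Proof. intros [F [H0 H]] HD. exists F; split; auto. Qed.

Lemma smooth_derivable D f t : smooth D f -> D t -> exists l, derivable_pt_lim f t l.
Proof. intros [F [<- H]] Ht. exists (F 1%nat t). apply H; auto. Qed.

Lemma smooth_continuous D f t : smooth D f -> D t -> continuity_pt f t.
Proof.
  intros Hs Ht. destruct (smooth_derivable D f t Hs Ht) as [l Hl].
  apply derivable_continuous_pt. exists l. exact Hl.
Qed.

(* Rational expressions in atoms carrying a whole sequence of derivatives.
   Symbolic differentiation stays inside this class, which gives closure of
   [smooth] under products and inverses without a Leibniz formula. *)
Inductive dexpr : Type :=
  | DAtom (F : nat -> R -> R) | DAdd (a b : dexpr) | DMul (a b : dexpr) | DInv (a : dexpr).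

Fixpoint dexpr_eval (e : dexpr) : R -> R :=
  match e with
  | DAtom F => F O
  | DAdd a b => fun t => dexpr_eval a t + dexpr_eval b t
  | DMul a b => fun t => dexpr_eval a t * dexpr_eval b t
  | DInv a => fun t => / dexpr_eval a t
  end.

Definition minus_one_atom : nat -> R -> R := fun k _ => match k with O => -1 | S _ => 0 end.

Fixpoint dexpr_deriv (e : dexpr) : dexpr :=
  match e with
  | DAtom F => DAtom (fun k => F (S k))
  | DAdd a b => DAdd (dexpr_deriv a) (dexpr_deriv b)
  | DMul a b => DAdd (DMul (dexpr_deriv a) b) (DMul a (dexpr_deriv b))
  | DInv a => DMul (DMul (DAtom minus_one_atom) (dexpr_deriv a)) (DMul (DInv a) (DInv a))
  end.

Fixpoint dexpr_ok (D : R -> Prop) (e : dexpr) : Prop :=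
  match e with
  | DAtom F => forall k t, D t -> derivable_pt_lim (F k) t (F (S k) t)
  | DAdd a b | DMul a b => dexpr_ok D a /\ dexpr_ok D b
  | DInv a => dexpr_ok D a /\ forall t, D t -> dexpr_eval a t <> 0
  end.

Lemma dexpr_deriv_correct D e : dexpr_ok D e ->
  dexpr_ok D (dexpr_deriv e) /\
  forall t, D t -> derivable_pt_lim (dexpr_eval e) t (dexpr_eval (dexpr_deriv e) t).
Proof.
  induction e as [F|a IHa b IHb|a IHa b IHb|a IHa]; simpl.
  - intros H. split; auto.
  - intros [[Ha' Ha]%IHa [Hb' Hb]%IHb]. split; auto.
    intros t Ht. apply (derivable_pt_lim_plus (dexpr_eval a) (dexpr_eval b)); auto.
  - intros [Ha0 Hb0]. destruct (IHa Ha0) as [Ha' Ha], (IHb Hb0) as [Hb' Hb]. split; [tauto|].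
    intros t Ht. apply (derivable_pt_lim_mult (dexpr_eval a) (dexpr_eval b)); auto.
  - intros [Ha0 Hn]. destruct (IHa Ha0) as [Ha' Ha]. split.
    + split; [split; [|auto]|split; split; auto].
      intros k t _. destruct k; apply derivable_pt_lim_const.
    + intros t Ht. apply is_derive_Reals. specialize (Hn t Ht).
      match goal with |- is_derive _ _ ?l => replace l with (- dexpr_eval (dexpr_deriv a) t / dexpr_eval a t ^ 2) end.
      * apply is_derive_inv; [apply is_derive_Reals; apply Ha|]; auto.
      * unfold minus_one_atom. field. auto.
Qed.

Lemma smooth_dexpr D e : dexpr_ok D e -> smooth D (dexpr_eval e).
Proof.
  intros H. exists (fun k => dexpr_eval (Nat.iter k dexpr_deriv e)). split; auto.
  intros k t Ht. assert (Hk : dexpr_ok D (Nat.iter k dexpr_deriv e)).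
  { induction k; simpl; auto. apply dexpr_deriv_correct; auto. }
  apply (proj2 (dexpr_deriv_correct D _ Hk)); auto.
Qed.

Lemma smooth_ext D f g : smooth D f -> (forall t, f t = g t) -> smooth D g.
Proof. intros H E. replace g with f; auto. apply functional_extensionality; auto. Qed.

Lemma smooth_plus D f g : smooth D f -> smooth D g -> smooth D (fun t => f t + g t).
Proof.
  intros [F [<- HF]] [G [<- HG]]. apply (smooth_dexpr D (DAdd (DAtom F) (DAtom G))). simpl; auto.
Qed.

Lemma smooth_mult D f g : smooth D f -> smooth D g -> smooth D (fun t => f t * g t).
Proof.
  intros [F [<- HF]] [G [<- HG]]. apply (smooth_dexpr D (DMul (DAtom F) (DAtom G))). simpl; auto.
Qed.

Lemma smooth_inv D f : smooth D f -> (forall t, D t -> f t <> 0) -> smooth D (fun t => / f t).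
Proof. intros [F [<- HF]] Hn. apply (smooth_dexpr D (DInv (DAtom F))). simpl; auto. Qed.

Lemma smooth_div D f g : smooth D f -> smooth D g -> (forall t, D t -> g t <> 0) ->
  smooth D (fun t => f t / g t).
Proof. intros. apply smooth_mult; auto. apply smooth_inv; auto. Qed.

Lemma smooth_const D c : smooth D (fun _ => c).
Proof.
  exists (fun k _ => match k with O => c | S _ => 0 end). split; auto.
  intros k t _. destruct k; apply derivable_pt_lim_const.
Qed.

Lemma smooth_sumR D n (f : nat -> R -> R) : (forall k, (k < n)%nat -> smooth D (f k)) ->
  smooth D (fun t => sumR n (fun k => f k t)).
Proof.
  induction n as [|n IH]; intros H.
  - apply (smooth_ext D (fun _ => 0)); [apply smooth_const|intros; reflexivity].
  - apply (smooth_ext D (fun t => sumR n (fun k => f k t) + f n t)).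
    + apply smooth_plus; [apply IH; intros; apply H; lia|apply H; lia].
    + intros; rewrite sumR_S; reflexivity.
Qed.

(** * Hadamard's lemma *)

Lemma open_interval_Ropen I : is_open_interval I -> Ropen I.
Proof. intros [_ H]. exact H. Qed.

Lemma open_interval_segment I a b s : is_open_interval I -> I a -> I b -> 0 <= s <= 1 ->
  I (a + s * (b - a)).
Proof.
  intros [Hc _] Ha Hb Hs. destruct (Rle_dec a b).
  - apply (Hc a _ b); auto. nra.
  - apply (Hc b _ a); auto. nra.
Qed.

Lemma continuity_2d_pt_pow_r k x y : continuity_2d_pt (fun _ v => v ^ k) x y.
Proof.
  induction k; simpl.
  - apply continuity_2d_pt_const.
  - apply continuity_2d_pt_mult; auto. apply continuity_2d_pt_id2.
Qed.

Section Hadamard.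
Variables (I : R -> Prop) (ts : R) (F : nat -> R -> R).
Hypothesis HI : is_open_interval I.
Hypothesis Hts : I ts.
Hypothesis HF : forall k t, I t -> derivable_pt_lim (F k) t (F (S k) t).

(* The k-th derivative of the quotient (F 0 t - F 0 ts) / (t - ts). *)
Definition hadamard_quot (k : nat) (t : R) : R :=
  RInt (fun s => s ^ k * F (S k) (ts + s * (t - ts))) 0 1.

Lemma segment_in u s : I u -> 0 <= s <= 1 -> I (ts + s * (u - ts)).
Proof. intros; apply open_interval_segment; auto. Qed.

Lemma F_continuous k x : I x -> continuity_pt (F k) x.
Proof. intros. apply derivable_continuous_pt. eexists. apply HF; auto. Qed.

Lemma segment_term_derive k s u : I (ts + s * (u - ts)) ->
  derivable_pt_lim (fun z => s ^ k * F (S k) (ts + s * (z - ts))) u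
    (s ^ S k * F (S (S k)) (ts + s * (u - ts))).
Proof.
  intros Hu.
  apply (derivable_pt_lim_eq _ _
    (0 * F (S k) (ts + s * (u - ts)) + s ^ k * (F (S (S k)) (ts + s * (u - ts)) * (0 + (0 * (u - ts) + s * (1 - 0)))))).
  2:{ simpl; ring. }
  apply (derivable_pt_lim_mult (fun _ => s ^ k) (fun z => F (S k) (ts + s * (z - ts)))).
  { apply derivable_pt_lim_const. }
  apply (derivable_pt_lim_comp (fun z => ts + s * (z - ts)) (F (S k))); [|apply HF; auto].
  apply derivable_pt_lim_plus; [apply derivable_pt_lim_const|].
  apply (derivable_pt_lim_mult (fun _ => s) (fun z => z - ts)); [apply derivable_pt_lim_const|].
  apply derivable_pt_lim_minus; [apply derivable_pt_lim_id|apply derivable_pt_lim_const].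
Qed.

Lemma segment_term_continuous k u z : I u -> 0 <= z <= 1 ->
  continuous (fun s => s ^ k * F (S k) (ts + s * (u - ts))) z.
Proof.
  intros Hu Hz. apply continuity_pt_filterlim, continuity_pt_mult.
  - apply derivable_continuous_pt, derivable_pt_pow.
  - apply (continuity_pt_comp (fun s => ts + s * (u - ts)) (F (S k))); [|apply F_continuous, segment_in; auto].
    apply derivable_continuous_pt. apply derivable_pt_plus; [apply derivable_pt_const|].
    apply derivable_pt_mult; [apply derivable_pt_id|apply derivable_pt_const].
Qed.

Lemma segment_term_Derive_continuous_2d k t s : I t -> 0 <= s <= 1 ->
  continuity_2d_pt (fun u v => Derive (fun z => v ^ k * F (S k) (ts + v * (z - ts))) u) t s.
Proof.
  intros Ht Hs.
  set (G := fun u v => v ^ S k * F (S (S k)) (ts + v * (u - ts))).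
  assert (Hp : continuity_2d_pt (fun u v => ts + v * (u - ts)) t s).
  { apply continuity_2d_pt_plus; [apply continuity_2d_pt_const|].
    apply continuity_2d_pt_mult; [apply continuity_2d_pt_id2|].
    apply continuity_2d_pt_minus; [apply continuity_2d_pt_id1|apply continuity_2d_pt_const]. }
  destruct (open_interval_Ropen I HI _ (segment_in t s Ht Hs)) as [e [He HeI]].
  apply (continuity_2d_pt_ext_loc G).
  - destruct (Hp (mkposreal e He)) as [d Hd]. exists d. intros u v Hu Hv.
    symmetry. apply is_derive_unique, is_derive_Reals, segment_term_derive, HeI, Hd; auto.
  - apply continuity_2d_pt_mult; [apply continuity_2d_pt_pow_r|].
    apply (continuity_1d_2d_pt_comp (F (S (S k))) (fun u v => ts + v * (u - ts))); auto.
    apply F_continuous, segment_in; auto.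
Qed.

Lemma hadamard_quot_derive k t : I t -> derivable_pt_lim (hadamard_quot k) t (hadamard_quot (S k) t).
Proof.
  intros Ht. apply is_derive_Reals. unfold hadamard_quot.
  destruct (open_interval_Ropen I HI t Ht) as [e [He HeI]].
  assert (Hder : forall s, 0 <= s <= 1 ->
    Derive (fun u => s ^ k * F (S k) (ts + s * (u - ts))) t = s ^ S k * F (S (S k)) (ts + s * (t - ts))).
  { intros s Hs. apply is_derive_unique, is_derive_Reals, segment_term_derive, segment_in; auto. }
  rewrite <- (RInt_ext (fun s => Derive (fun u => s ^ k * F (S k) (ts + s * (u - ts))) t))
    by (intros s Hs; rewrite Rmin_left, Rmax_right in Hs by lra; apply Hder; lra).
  apply (is_derive_RInt_param (fun u s => s ^ k * F (S k) (ts + s * (u - ts))) 0 1 t).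
  - exists (mkposreal e He). intros u Hu s Hs. rewrite Rmin_left, Rmax_right in Hs by lra.
    eexists. apply is_derive_Reals, segment_term_derive, segment_in; auto.
  - intros s Hs. rewrite Rmin_left, Rmax_right in Hs by lra.
    apply segment_term_Derive_continuous_2d; auto.
  - exists (mkposreal e He). intros u Hu. apply (@ex_RInt_continuous R_CompleteNormedModule).
    intros z Hz. rewrite Rmin_left, Rmax_right in Hz by lra. apply segment_term_continuous; auto.
Qed.

(* Fundamental theorem of calculus along the segment from [ts] to [t]. *)
Lemma hadamard_quot_spec t : I t -> F 0 t - F 0 ts = (t - ts) * hadamard_quot 0 t.
Proof.
  intros Ht.
  assert (HR : is_RInt (fun s => (t - ts) * F 1 (ts + s * (t - ts))) 0 1
                 (minus (F 0 (ts + 1 * (t - ts))) (F 0 (ts + 0 * (t - ts))))).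
  { apply (is_RInt_derive (fun s => F 0 (ts + s * (t - ts)))).
    - intros s Hs. rewrite Rmin_left, Rmax_right in Hs by lra. apply is_derive_Reals.
      apply (derivable_pt_lim_eq _ _ (F 1 (ts + s * (t - ts)) * (0 + (1 * (t - ts) + s * 0)))); [|ring].
      apply (derivable_pt_lim_comp (fun s => ts + s * (t - ts)) (F 0)); [|apply HF, segment_in; auto].
      apply derivable_pt_lim_plus; [apply derivable_pt_lim_const|].
      apply (derivable_pt_lim_mult (fun s => s) (fun _ => t - ts)).
      + apply derivable_pt_lim_id.
      + apply derivable_pt_lim_const.
    - intros s Hs. rewrite Rmin_left, Rmax_right in Hs by lra.
      apply (continuous_ext (fun s => (t - ts) * (s ^ 0 * F 1 (ts + s * (t - ts))))); [intros; simpl; ring|].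
      apply (continuous_scal_r (t - ts) (fun s => s ^ 0 * F 1 (ts + s * (t - ts)))).
      apply segment_term_continuous; auto. }
  apply (is_RInt_unique (V:=R_CompleteNormedModule)) in HR.
  rewrite (RInt_ext _ (fun s => scal (t - ts) (s ^ 0 * F 1 (ts + s * (t - ts))))) in HR
    by (intros; unfold scal; simpl; unfold mult; simpl; ring).
  rewrite (RInt_scal (V:=R_CompleteNormedModule)) in HR.
  2:{ apply (@ex_RInt_continuous R_CompleteNormedModule). intros z Hz.
      rewrite Rmin_left, Rmax_right in Hz by lra. apply segment_term_continuous; auto. }
  change (scal (t - ts) ?x) with ((t - ts) * x) in HR.
  unfold hadamard_quot. rewrite HR. unfold minus, plus, opp; simpl.
  replace (ts + 1 * (t - ts)) with t by ring. replace (ts + 0 * (t - ts)) with ts by ring. ring.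
Qed.

End Hadamard.

Lemma hadamard I ts f : is_open_interval I -> I ts -> smooth I f -> f ts = 0 ->
  exists h, smooth I h /\ (forall t, I t -> f t = (t - ts) * h t) /\ derivable_pt_lim f ts (h ts).
Proof.
  intros HI Hts [F [<- HF]] Hf0.
  assert (Hsm : smooth I (hadamard_quot ts F 0)).
  { exists (hadamard_quot ts F). split; auto. intros k t Ht. apply (hadamard_quot_derive I); auto. }
  assert (Hq : forall t, I t -> F 0%nat t = (t - ts) * hadamard_quot ts F 0 t).
  { intros t Ht. rewrite <- (hadamard_quot_spec I ts F HI Hts HF t Ht), Hf0. ring. }
  exists (hadamard_quot ts F 0). split; [|split]; auto.
  destruct (smooth_derivable I _ ts Hsm Hts) as [l Hl].
  destruct (open_interval_Ropen I HI ts Hts) as [e [He HeI]].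
  apply (derivable_pt_lim_ext_loc (fun t => (t - ts) * hadamard_quot ts F 0 t) _ ts _ e He).
  { intros y Hy. rewrite Hq; auto. }
  apply (derivable_pt_lim_eq _ _ ((1 - 0) * hadamard_quot ts F 0 ts + (ts - ts) * l)); [|ring].
  apply (derivable_pt_lim_mult (fun t => t - ts) (hadamard_quot ts F 0)); auto.
  apply derivable_pt_lim_minus; [apply derivable_pt_lim_id|apply derivable_pt_lim_const].
Qed.

(** * Uniqueness for the Jacobi equation *)

Lemma derivable_pt_lim_exp_scal C t : derivable_pt_lim (fun t => exp (C * t)) t (C * exp (C * t)).
Proof.
  apply (derivable_pt_lim_eq _ _ (exp (C * t) * (0 * t + C * 1))); [|ring].
  apply (derivable_pt_lim_comp (fun t => C * t) exp); [|apply derivable_pt_lim_exp].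
  apply (derivable_pt_lim_mult (fun _ => C) (fun t => t)).
  - apply derivable_pt_lim_const.
  - apply derivable_pt_lim_id.
Qed.

(* Gronwall: [E exp(-C t)] is nonincreasing and [E exp(C t)] nondecreasing. *)
Lemma gronwall_vanish a b E E' C : a < b ->
  (forall c, a <= c <= b -> derivable_pt_lim E c (E' c)) ->
  (forall c, a <= c <= b -> 0 <= E c) ->
  (forall c, a <= c <= b -> Rabs (E' c) <= C * E c) ->
  (E a = 0 <-> E b = 0).
Proof.
  intros Hab Hd Hp Hb.
  assert (HMVT : forall K, exists c, E b * exp (K * b) - E a * exp (K * a) =
            (E' c * exp (K * c) + E c * (K * exp (K * c))) * (b - a) /\ a < c < b).
  { intros K. apply (MVT_cor2 (fun t => E t * exp (K * t))); auto. intros c Hc.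
    apply (derivable_pt_lim_mult E (fun t => exp (K * t))); auto. apply derivable_pt_lim_exp_scal. }
  assert (Hbc : forall c, a < c < b -> - (C * E c) <= E' c <= C * E c).
  { intros c Hc. apply Rabs_le_between. apply Hb. lra. }
  assert (0 <= E a) by (apply Hp; lra). assert (0 <= E b) by (apply Hp; lra).
  split; intros Hzero.
  - destruct (HMVT (- C)) as [c [Hc1 Hc2]]. specialize (Hbc c Hc2).
    pose proof (exp_pos (- C * c)). pose proof (exp_pos (- C * b)). rewrite Hzero in Hc1.
    assert (E' c * exp (- C * c) + E c * (- C * exp (- C * c)) <= 0) by nra.
    assert (E b * exp (- C * b) <= 0) by nra. nra.
  - destruct (HMVT C) as [c [Hc1 Hc2]]. specialize (Hbc c Hc2).
    pose proof (exp_pos (C * c)). pose proof (exp_pos (C * a)). rewrite Hzero in Hc1.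
    assert (0 <= E' c * exp (C * c) + E c * (C * exp (C * c))) by nra.
    assert (E a * exp (C * a) <= 0) by nra. nra.
Qed.

Lemma derivable_pt_lim_sumR n (f : nat -> R -> R) (g : nat -> R) t :
  (forall k, (k < n)%nat -> derivable_pt_lim (f k) t (g k)) ->
  derivable_pt_lim (fun t => sumR n (fun k => f k t)) t (sumR n g).
Proof.
  induction n as [|n IH]; intros H.
  - apply (derivable_pt_lim_ext_loc (fun _ => 0) _ t 0 1); [lra|reflexivity|apply derivable_pt_lim_const].
  - rewrite sumR_S. apply (derivable_pt_lim_ext_loc (fun t => sumR n (fun k => f k t) + f n t) _ t _ 1); [lra| |].
    + intros; rewrite sumR_S; reflexivity.
    + apply (derivable_pt_lim_plus (fun t => sumR n (fun k => f k t)) (f n)); [apply IH|]; intros; apply H; lia.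
Qed.

Lemma continuity_pt_sumR n (f : nat -> R -> R) t :
  (forall k, (k < n)%nat -> continuity_pt (f k) t) ->
  continuity_pt (fun t => sumR n (fun k => f k t)) t.
Proof.
  intros H. assert (Hd : forall k, (k < n)%nat -> continuous (f k) t) by (intros; apply continuity_pt_filterlim; auto).
  apply continuity_pt_filterlim. induction n as [|n IH].
  - apply continuous_const.
  - apply (continuous_ext (fun t => sumR n (fun k => f k t) + f n t)); [intros; rewrite sumR_S; reflexivity|].
    apply (continuous_plus (fun t => sumR n (fun k => f k t)) (f n)); [apply IH|]; intros; auto; apply Hd; lia.
Qed.

Lemma Rabs_two_mul_le a b : Rabs (2 * a * b) <= a * a + b * b.
Proof. pose proof (Rle_0_sqr (a + b)). pose proof (Rle_0_sqr (a - b)). unfold Rsqr in *. apply Rabs_le; nra. Qed.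

(* The energy [|J|^2 + |J'|^2] of a solution of [J'' = - Rm J] grows at a
   rate controlled by the entrywise l1-norm of [Rm]. *)
Lemma jacobi_energy_bound n (J J1 : Vec) (Rm : Mat) :
  Rabs (sumR n (fun i => 2 * J i * J1 i + 2 * J1 i * (- sumR n (fun l => Rm i l * J l))))
  <= (1 + sumR n (fun i => sumR n (fun l => Rabs (Rm i l)))) * sumR n (fun i => J i * J i + J1 i * J1 i).
Proof.
  set (M := sumR n (fun i => sumR n (fun l => Rabs (Rm i l)))).
  assert (HM : 0 <= M) by (apply sumR_ge0; intros; apply sumR_ge0; intros; apply Rabs_pos).
  assert (HJ : 0 <= sumR n (fun i => J i * J i)) by (apply sumR_ge0; intros; nra).
  assert (HJ1 : 0 <= sumR n (fun i => J1 i * J1 i)) by (apply sumR_ge0; intros; nra).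
  assert (H1 : Rabs (sumR n (fun i => 2 * J i * J1 i)) <= sumR n (fun i => J i * J i + J1 i * J1 i)).
  { eapply Rle_trans; [apply sumR_abs|]. apply sumR_le. intros. apply Rabs_two_mul_le. }
  assert (H2 : Rabs (sumR n (fun i => 2 * J1 i * - sumR n (fun l => Rm i l * J l)))
     <= sumR n (fun i => sumR n (fun l => Rabs (Rm i l) * (J1 i * J1 i + J l * J l)))).
  { eapply Rle_trans; [apply sumR_abs|]. apply sumR_le. intros i _.
    replace (2 * J1 i * - sumR n (fun l => Rm i l * J l))
      with (sumR n (fun l => - (2 * J1 i * (Rm i l * J l)))) by (rewrite sumR_opp, sumR_scal_l; ring).
    eapply Rle_trans; [apply sumR_abs|]. apply sumR_le. intros l _.
    replace (- (2 * J1 i * (Rm i l * J l))) with (Rm i l * - (2 * J1 i * J l)) by ring.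
    rewrite Rabs_mult, Rabs_Ropp. apply Rmult_le_compat_l; [apply Rabs_pos|apply Rabs_two_mul_le]. }
  assert (H3 : sumR n (fun i => sumR n (fun l => Rabs (Rm i l) * (J1 i * J1 i + J l * J l)))
     <= M * sumR n (fun i => J1 i * J1 i) + M * sumR n (fun l => J l * J l)).
  { rewrite (sumR_ext n _ (fun i => sumR n (fun l => Rabs (Rm i l)) * (J1 i * J1 i)
                                   + sumR n (fun l => Rabs (Rm i l) * (J l * J l)))).
    2:{ intros. rewrite <- sumR_scal_r, <- sumR_plus. apply sumR_ext. intros; ring. }
    rewrite sumR_plus. apply Rplus_le_compat.
    - rewrite <- sumR_scal_l. apply sumR_le. intros i Hi. apply Rmult_le_compat_r; [nra|].
      apply (sumR_term_le n (fun i => sumR n (fun l => Rabs (Rm i l))) i Hi).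
      intros; apply sumR_ge0; intros; apply Rabs_pos.
    - rewrite sumR_swap, <- sumR_scal_l. apply sumR_le. intros l Hl.
      rewrite sumR_scal_r. apply Rmult_le_compat_r; [nra|].
      unfold M. rewrite sumR_swap.
      apply (sumR_term_le n (fun l => sumR n (fun i => Rabs (Rm i l))) l Hl).
      intros; apply sumR_ge0; intros; apply Rabs_pos. }
  rewrite sumR_plus in *. rewrite sumR_plus. eapply Rle_trans; [apply Rabs_triang|]. nra.
Qed.

Section JacobiUniqueness.
Variables (n : nat) (I : R -> Prop) (Rc A Ad Add : R -> Mat).
Hypothesis HI : is_open_interval I.
Hypothesis HRc : forall i j, (i < n)%nat -> (j < n)%nat -> smooth I (fun t => Rc t i j).
Hypothesis HdA : forall t i j, I t -> (i < n)%nat -> (j < n)%nat ->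
  derivable_pt_lim (fun s => A s i j) t (Ad t i j).
Hypothesis HdAd : forall t i j, I t -> (i < n)%nat -> (j < n)%nat ->
  derivable_pt_lim (fun s => Ad s i j) t (Add t i j).
Hypothesis Hjac : forall t i j, I t -> (i < n)%nat -> (j < n)%nat ->
  Add t i j + mm n (Rc t) (A t) i j = 0.

Lemma mv_derive (M M' : R -> Mat) x t i : I t -> (i < n)%nat ->
  (forall t i j, I t -> (i < n)%nat -> (j < n)%nat -> derivable_pt_lim (fun s => M s i j) t (M' t i j)) ->
  derivable_pt_lim (fun s => mv n (M s) x i) t (mv n (M' t) x i).
Proof.
  intros Ht Hi H. apply (derivable_pt_lim_sumR n (fun k s => M s i k * x k)). intros k Hk.
  apply (derivable_pt_lim_eq _ _ (M' t i k * x k + M t i k * 0)); [|ring].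
  apply (derivable_pt_lim_mult (fun s => M s i k) (fun _ => x k)); [apply H; auto|apply derivable_pt_lim_const].
Qed.

Lemma mv_Add x t i : I t -> (i < n)%nat ->
  mv n (Add t) x i = - sumR n (fun l => Rc t i l * mv n (A t) x l).
Proof.
  intros Ht Hi. change (mv n (Add t) x i = - mv n (Rc t) (mv n (A t) x) i).
  rewrite <- mv_mm. unfold mv. rewrite <- sumR_opp. apply sumR_ext. intros k Hk.
  replace (Add t i k) with (- mm n (Rc t) (A t) i k) by (pose proof (Hjac t i k Ht Hi Hk); lra). ring.
Qed.

Definition jacobi_energy (x : Vec) (t : R) : R :=
  sumR n (fun i => mv n (A t) x i * mv n (A t) x i + mv n (Ad t) x i * mv n (Ad t) x i).

Lemma jacobi_energy_derive x t : I t ->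
  derivable_pt_lim (jacobi_energy x) t
    (sumR n (fun i => 2 * mv n (A t) x i * mv n (Ad t) x i
                      + 2 * mv n (Ad t) x i * (- sumR n (fun l => Rc t i l * mv n (A t) x l)))).
Proof.
  intros Ht. apply (derivable_pt_lim_sumR n (fun i t => mv n (A t) x i * mv n (A t) x i + mv n (Ad t) x i * mv n (Ad t) x i)).
  intros i Hi. rewrite <- mv_Add by auto.
  assert (D1 : derivable_pt_lim (fun s => mv n (A s) x i) t (mv n (Ad t) x i)) by (apply mv_derive; auto).
  assert (D2 : derivable_pt_lim (fun s => mv n (Ad s) x i) t (mv n (Add t) x i)) by (apply mv_derive; auto).
  apply (derivable_pt_lim_eq _ _ ((mv n (Ad t) x i * mv n (A t) x i + mv n (A t) x i * mv n (Ad t) x i)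
    + (mv n (Add t) x i * mv n (Ad t) x i + mv n (Ad t) x i * mv n (Add t) x i))); [|ring].
  apply (derivable_pt_lim_plus (fun t => mv n (A t) x i * mv n (A t) x i) (fun t => mv n (Ad t) x i * mv n (Ad t) x i));
    apply derivable_pt_lim_mult; auto.
Qed.

Lemma jacobi_kernel_transport x t1 t2 : I t1 -> I t2 ->
  in_ker n (A t1) x -> in_ker n (Ad t1) x -> in_ker n (A t2) x /\ in_ker n (Ad t2) x.
Proof.
  intros H1 H2 HA1 HAd1.
  set (Mf := fun t => sumR n (fun i => sumR n (fun l => Rabs (Rc t i l)))).
  assert (HE0 : forall t, 0 <= jacobi_energy x t) by (intros; apply sumR_ge0; intros; nra).
  assert (Hseg : forall c, Rmin t1 t2 <= c <= Rmax t1 t2 -> I c).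
  { intros c Hc. destruct HI as [Hc' _]. unfold Rmin, Rmax in Hc. destruct (Rle_dec t1 t2).
    - apply (Hc' t1 c t2); auto.
    - apply (Hc' t2 c t1); auto; lra. }
  assert (HMc : forall c, I c -> continuity_pt Mf c).
  { intros c Hc. apply (continuity_pt_sumR n (fun i t => sumR n (fun l => Rabs (Rc t i l)))). intros i Hi.
    apply (continuity_pt_sumR n (fun l t => Rabs (Rc t i l))). intros l Hl.
    apply (continuity_pt_comp (fun t => Rc t i l) Rabs); [|apply Rcontinuity_abs].
    eapply smooth_continuous; [apply HRc|]; auto. }
  assert (HE1 : jacobi_energy x t1 = 0).
  { apply sumR_eq0. intros i Hi. rewrite HA1, HAd1; auto. ring. }
  assert (HE2 : jacobi_energy x t2 = 0).
  { destruct (Req_dec t1 t2) as [<-|Hne]; auto.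
    assert (Hab : Rmin t1 t2 < Rmax t1 t2) by (unfold Rmin, Rmax; destruct (Rle_dec t1 t2); lra).
    destruct (continuity_ab_maj Mf (Rmin t1 t2) (Rmax t1 t2)) as [Mx [HMx _]]; [lra|auto|].
    destruct (gronwall_vanish (Rmin t1 t2) (Rmax t1 t2) (jacobi_energy x)
      (fun t => sumR n (fun i => 2 * mv n (A t) x i * mv n (Ad t) x i
                                 + 2 * mv n (Ad t) x i * (- sumR n (fun l => Rc t i l * mv n (A t) x l))))
      (1 + Mf Mx) Hab) as [G1 G2]; auto.
    - intros c Hc. apply jacobi_energy_derive; auto.
    - intros c Hc. eapply Rle_trans; [apply jacobi_energy_bound|]. apply Rmult_le_compat_r; [apply HE0|].
      change (1 + Mf c <= 1 + Mf Mx). specialize (HMx c Hc). lra.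
    - unfold Rmin, Rmax in *. destruct (Rle_dec t1 t2); auto. }
  assert (Hz : forall i, (i < n)%nat -> mv n (A t2) x i * mv n (A t2) x i + mv n (Ad t2) x i * mv n (Ad t2) x i = 0).
  { apply (sumR_ge0_eq0 n _); [intros; nra|exact HE2]. }
  split; intros i Hi; specialize (Hz i Hi); nra.
Qed.

End JacobiUniqueness.

(** * Determinant, adjugate and kernel projector *)

Module MatrixFacts.
From mathcomp Require Import all_boot all_algebra Rstruct.
Import GRing.Theory.
Local Open Scope ring_scope.

Definition toM (n : nat) (M : Mat) : 'M[R]_n := \matrix_(i < n, j < n) M i j.

(* Entries outside the [n x n] block are set to [0]. *)
Definition fromM (n : nat) (B : 'M[R]_n) : Mat :=
  fun i j => match @insub _ (fun k => k < n)%N 'I_n i, @insub _ (fun k => k < n)%N 'I_n j with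
             | Some i', Some j' => B i' j' | _, _ => 0 end.

Definition mxdet (n : nat) (M : Mat) : R := \det (toM n M).
Definition mxadj (n : nat) (M : Mat) : Mat := fromM n (\adj (toM n M)).

Lemma fromM_E n B i j (Hi : (i < n)%N) (Hj : (j < n)%N) : fromM n B i j = B (Ordinal Hi) (Ordinal Hj).
Proof. by rewrite /fromM (@insubT _ (fun k => (k < n)%N) 'I_n i Hi) (@insubT _ (fun k => (k < n)%N) 'I_n j Hj). Qed.

Lemma toM_fromM n B : toM n (fromM n B) = B.
Proof. apply/matrixP => -[i Hi] [j Hj]. by rewrite mxE fromM_E. Qed.

Lemma sumR_big n f : sumR n f = \sum_(i < n) f i.
Proof. elim: n => [|n IH]; first by rewrite sumR_O big_ord0. by rewrite sumR_S big_ord_recr /= IH. Qed.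

Lemma mm_toM n M N i j (Hi : (i < n)%N) (Hj : (j < n)%N) :
  mm n M N i j = (toM n M *m toM n N) (Ordinal Hi) (Ordinal Hj).
Proof. rewrite mxE /mm sumR_big. apply: eq_bigr => k _. by rewrite !mxE. Qed.

Lemma idm_E n i j (Hi : (i < n)%N) (Hj : (j < n)%N) : idm i j = (1%:M : 'M[R]_n) (Ordinal Hi) (Ordinal Hj).
Proof.
  rewrite mxE /idm /=. have -> : (Ordinal Hi == Ordinal Hj) = (i == j) by [].
  case: (Nat.eqb_spec i j) => [->|Hne]; first by rewrite eqxx.
  by rewrite (introF eqP Hne).
Qed.

Lemma smooth_big D (I : Type) (r : seq I) (P : pred I) (F : I -> R -> R) :
  (forall i, smooth D (F i)) -> smooth D (fun t => \sum_(i <- r | P i) F i t).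
Proof.
  move=> H. elim: r => [|a r IH].
  - apply: (smooth_ext D (fun _ => 0)); first exact: smooth_const. by move=> t; rewrite big_nil.
  - case HP: (P a).
    + apply: (smooth_ext D (fun t => F a t + \sum_(i <- r | P i) F i t)); first exact: smooth_plus.
      by move=> t; rewrite big_cons HP.
    + apply: (smooth_ext D (fun t => \sum_(i <- r | P i) F i t)) => // t. by rewrite big_cons HP.
Qed.

Lemma smooth_bigprod D (I : Type) (r : seq I) (P : pred I) (F : I -> R -> R) :
  (forall i, smooth D (F i)) -> smooth D (fun t => \prod_(i <- r | P i) F i t).
Proof.
  move=> H. elim: r => [|a r IH].
  - apply: (smooth_ext D (fun _ => 1)); first exact: smooth_const. by move=> t; rewrite big_nil.
  - case HP: (P a).
    + apply: (smooth_ext D (fun t => F a t * \prod_(i <- r | P i) F i t)); first exact: smooth_mult.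
      by move=> t; rewrite big_cons HP.
    + apply: (smooth_ext D (fun t => \prod_(i <- r | P i) F i t)) => // t. by rewrite big_cons HP.
Qed.

Lemma smooth_det D m (N : R -> 'M[R]_m) :
  (forall i j, smooth D (fun t => N t i j)) -> smooth D (fun t => \det (N t)).
Proof.
  move=> H. apply: smooth_big => s.
  apply: smooth_mult; first exact: smooth_const. apply: smooth_bigprod => i. exact: H.
Qed.

Lemma smooth_adj D m (N : R -> 'M[R]_m) :
  (forall i j, smooth D (fun t => N t i j)) -> forall i j, smooth D (fun t => \adj (N t) i j).
Proof.
  move=> H i j. apply: (smooth_ext D (fun t => (-1) ^+ (j + i) * \det (row' j (col' i (N t))))).
  - apply: smooth_mult; first exact: smooth_const. apply: smooth_det => k l.
    apply: (smooth_ext D (fun t => N t (lift j k) (lift i l))) => // t. by rewrite !mxE.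
  - by move=> t; rewrite mxE /cofactor.
Qed.

Lemma smooth_toM D n (M : R -> Mat) :
  (forall i j, lt i n -> lt j n -> smooth D (fun t => M t i j)) ->
  forall i j : 'I_n, smooth D (fun t => toM n (M t) i j).
Proof.
  move=> HM i j. apply: (smooth_ext D (fun t => M t i j)); last by move=> t; rewrite mxE.
  by apply: HM; apply/ltP.
Qed.

Local Close Scope ring_scope.
Local Open Scope R_scope.

Lemma mxdet_smooth D n (M : R -> Mat) :
  (forall i j, lt i n -> lt j n -> smooth D (fun t => M t i j)) -> smooth D (fun t => mxdet n (M t)).
Proof. by move=> HM; apply/smooth_det/smooth_toM. Qed.

Lemma mxadj_smooth D n (M : R -> Mat) i j : lt i n -> lt j n ->
  (forall i j, lt i n -> lt j n -> smooth D (fun t => M t i j)) -> smooth D (fun t => mxadj n (M t) i j).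
Proof.
  move=> /ltP Hi /ltP Hj HM.
  apply: (smooth_ext D (fun t => (\adj (toM n (M t)))%R (Ordinal Hi) (Ordinal Hj))).
  - exact/smooth_adj/smooth_toM.
  - by move=> t; rewrite /mxadj fromM_E.
Qed.

Lemma mm_mxadj_r n M i j : lt i n -> lt j n -> mm n M (mxadj n M) i j = mxdet n M * idm i j.
Proof.
  move=> /ltP Hi /ltP Hj. rewrite (mm_toM _ _ _ _ _ Hi Hj) (idm_E _ _ _ Hi Hj) toM_fromM.
  by rewrite mul_mx_adj !mxE -mulr_natr.
Qed.

Lemma mm_mxadj_l n M i j : lt i n -> lt j n -> mm n (mxadj n M) M i j = mxdet n M * idm i j.
Proof.
  move=> /ltP Hi /ltP Hj. rewrite (mm_toM _ _ _ _ _ Hi Hj) (idm_E _ _ _ Hi Hj) toM_fromM.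
  by rewrite mul_adj_mx !mxE -mulr_natr.
Qed.

Lemma mxdet_neq0_of_invertible n M : invertible n M -> mxdet n M <> 0.
Proof.
  move=> [B HB] Hd. have E : (toM n B *m toM n M = 1%:M)%R.
  { apply/matrixP => -[i Hi] [j Hj]. rewrite -mm_toM -idm_E.
    by case: (HB i j (elimT ltP Hi) (elimT ltP Hj)). }
  have := congr1 determinant E. rewrite det_mulmx det1 => /eqP.
  by rewrite /mxdet in Hd; rewrite Hd mulr0 eq_sym oner_eq0.
Qed.

Lemma mxdet_neq0_of_injective n M :
  (forall x, in_ker n M x -> forall i, lt i n -> x i = 0) -> mxdet n M <> 0.
Proof.
  move=> H Hd. have : (\det (toM n M)^T == 0)%R by rewrite det_tr; apply/eqP.
  case/det0P => u Hu0 HuA.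
  pose x : Vec := fun k => match @insub _ (fun k => k < n)%N 'I_n k with Some k' => u 0%R k' | None => 0 end.
  have xE : forall k (Hk : (k < n)%N), x k = u 0%R (Ordinal Hk).
  { move=> k Hk. by rewrite /x (@insubT _ (fun k => (k < n)%N) 'I_n k Hk). }
  have Hx : in_ker n M x.
  { move=> i /ltP Hi. transitivity ((u *m (toM n M)^T) 0 (Ordinal Hi))%R; last by rewrite HuA mxE.
    rewrite /mv sumR_big mxE. apply: eq_bigr => -[k Hk] _. by rewrite xE !mxE mulrC. }
  move/eqP: Hu0; apply. apply/rowP => -[k Hk]. rewrite !mxE -xE. exact: (H x Hx k (elimT ltP Hk)).
Qed.

Lemma kernel_projector n (M : Mat) : exists P : Mat,
  (forall i j, lt i n -> lt j n -> mm n M P i j = 0) /\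
  (forall i j, lt i n -> lt j n -> mm n P P i j = P i j) /\
  (forall x, in_ker n M x -> forall i, lt i n -> mv n P x i = x i).
Proof.
  set A := toM n M. set K := kermx A^T%R. set Q := proj_mx K (K^C)%MS.
  have QK : (Q <= K)%MS by rewrite -[Q]mul1mx proj_mx_sub.
  have QA : (Q *m A^T = 0)%R by apply/sub_kermxP.
  have QQ : (Q *m Q = Q)%R by apply: proj_mx_id; [exact: capmx_compl | exact: QK].
  exists (fromM n Q^T%R). split; [|split].
  - move=> i j /ltP Hi /ltP Hj. rewrite (mm_toM _ _ _ _ _ Hi Hj) toM_fromM.
    have -> : (toM n M *m Q^T = (Q *m A^T)^T)%R by rewrite [X in _ = X]trmx_mul trmxK.
    by rewrite QA !mxE.
  - move=> i j /ltP Hi /ltP Hj. by rewrite (mm_toM _ _ _ _ _ Hi Hj) toM_fromM fromM_E -trmx_mul QQ.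
  - move=> x Hx i /ltP Hi.
    set u : 'rV[R]_n := (\row_k x k)%R.
    have uA : (u *m A^T = 0)%R.
    { apply/rowP => j. rewrite !mxE. transitivity (mv n M x j); last exact: (Hx j (elimT ltP (ltn_ord j))).
      rewrite /mv sumR_big. apply: eq_bigr => k _. by rewrite !mxE mulrC. }
    have uQ : (u *m Q = u)%R by apply: proj_mx_id; [exact: capmx_compl | apply/sub_kermxP].
    have := congr1 (fun w : 'rV[R]_n => w 0%R (Ordinal Hi)) uQ. rewrite /= !mxE => <-.
    rewrite /mv sumR_big. apply: eq_bigr => -[k Hk] _. by rewrite (fromM_E _ _ _ _ Hi Hk) !mxE mulrC.
Qed.

End MatrixFacts.
Import MatrixFacts.

(* [M^{-*} v] by Cramer's rule; junk when [mxdet n M = 0]. *)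
Definition cramer (n : nat) (M : Mat) (v : Vec) : Vec :=
  fun i => sumR n (fun k => mxadj n M k i * v k) / mxdet n M.

Lemma invertible_of_mxdet n M : mxdet n M <> 0 -> invertible n M.
Proof.
  intros Hd. exists (fun i j => / mxdet n M * mxadj n M i j). intros i j Hi Hj.
  rewrite mm_scal_l, mm_scal_r, mm_mxadj_l, mm_mxadj_r by auto. split; field; auto.
Qed.

Lemma invertible_mxdet n M : invertible n M <-> mxdet n M <> 0.
Proof. split; [apply mxdet_neq0_of_invertible|apply invertible_of_mxdet]. Qed.

Lemma cramer_invstar n M v : mxdet n M <> 0 -> is_invstar n M v (cramer n M v).
Proof.
  intros Hd i Hi. unfold mv, tr, cramer.
  rewrite (sumR_ext n _ (fun k => / mxdet n M * sumR n (fun l => mxadj n M l k * M k i * v l))).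
  2:{ intros k Hk. unfold Rdiv. rewrite <- sumR_scal_r, <- !sumR_scal_l. apply sumR_ext. intros; ring. }
  rewrite sumR_scal_l, sumR_swap.
  rewrite (sumR_ext n _ (fun l => mxdet n M * (idm i l * v l))).
  2:{ intros l Hl. transitivity (mm n (mxadj n M) M l i * v l); [unfold mm; rewrite <- sumR_scal_r; reflexivity|].
      rewrite mm_mxadj_l by auto. unfold idm. rewrite Nat.eqb_sym. ring. }
  rewrite sumR_scal_l, sumR_idm_l by auto. field; auto.
Qed.

Lemma invstar_eq_cramer n M v w : mxdet n M <> 0 -> is_invstar n M v w ->
  forall i, (i < n)%nat -> w i = cramer n M v i.
Proof.
  intros Hd Hw i Hi. unfold cramer.
  rewrite (sumR_ext n _ (fun k => sumR n (fun l => M l k * mxadj n M k i * w l))).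
  2:{ intros k Hk. rewrite <- (Hw k Hk). unfold mv, tr. rewrite <- sumR_scal_l. apply sumR_ext; intros; ring. }
  rewrite sumR_swap.
  rewrite (sumR_ext n _ (fun l => mxdet n M * (idm i l * w l))).
  2:{ intros l Hl. transitivity (mm n M (mxadj n M) l i * w l); [unfold mm; rewrite <- sumR_scal_r; reflexivity|].
      rewrite mm_mxadj_r by auto. unfold idm. rewrite Nat.eqb_sym. ring. }
  rewrite sumR_scal_l, sumR_idm_l by auto. field; auto.
Qed.

Lemma smooth_cramer D n (M : R -> Mat) v i : (i < n)%nat ->
  (forall i j, (i < n)%nat -> (j < n)%nat -> smooth D (fun t => M t i j)) ->
  (forall t, D t -> mxdet n (M t) <> 0) -> smooth D (fun t => cramer n (M t) v i).
Proof.
  intros Hi HM Hd. apply smooth_div; auto; [|apply mxdet_smooth; auto].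
  apply (smooth_sumR D n (fun k t => mxadj n (M t) k i * v k)). intros k Hk.
  apply smooth_mult; [apply mxadj_smooth; auto|apply smooth_const].
Qed.

Definition mx_idem (n : nat) (P : Mat) : Prop :=
  forall i j, (i < n)%nat -> (j < n)%nat -> mm n P P i j = P i j.

Definition proj_compl (P : Mat) : Mat := fun i j => idm i j - P i j.

Definition proj_dilate (P : Mat) (s : R) : Mat := fun i j => s * P i j + proj_compl P i j.

Lemma mx_idem_tr n P : mx_idem n P -> mx_idem n (tr P).
Proof. intros H i j Hi Hj. rewrite mm_tr. apply H; auto. Qed.

Lemma tr_proj_dilate P s i j : tr (proj_dilate P s) i j = proj_dilate (tr P) s i j.
Proof. unfold tr, proj_dilate, proj_compl, idm. rewrite Nat.eqb_sym. reflexivity. Qed.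

Section Projector.
Variables (n : nat) (P : Mat).
Hypothesis HP : mx_idem n P.

Lemma mm_proj_compl_r i j : (i < n)%nat -> (j < n)%nat -> mm n P (proj_compl P) i j = 0.
Proof. intros. unfold proj_compl. rewrite mm_minus_r, mm_idm_r, HP by auto. ring. Qed.

Lemma mm_proj_compl_l i j : (i < n)%nat -> (j < n)%nat -> mm n (proj_compl P) P i j = 0.
Proof.
  intros Hi Hj. unfold mm, proj_compl, Rminus.
  rewrite (sumR_ext n _ (fun k => idm i k * P k j + - (P i k * P k j))) by (intros; ring).
  rewrite sumR_plus, sumR_opp, sumR_idm_l by auto. change (P i j + - mm n P P i j = 0). rewrite HP; auto. ring.
Qed.

Lemma proj_compl_idem : mx_idem n (proj_compl P).
Proof.
  intros i j Hi Hj. unfold mm at 1. unfold proj_compl at 1. unfold Rminus.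
  rewrite (sumR_ext n _ (fun k => idm i k * proj_compl P k j + - (P i k * proj_compl P k j))) by (intros; ring).
  rewrite sumR_plus, sumR_opp, sumR_idm_l by auto.
  change (proj_compl P i j + - mm n P (proj_compl P) i j = proj_compl P i j).
  rewrite mm_proj_compl_r by auto. ring.
Qed.

Lemma mv_idem y j : (j < n)%nat -> mv n P (mv n P y) j = mv n P y j.
Proof. intros Hj. rewrite <- mv_mm. apply sumR_ext. intros k Hk. rewrite HP; auto. Qed.

Lemma mv_proj_dilate s y j : (j < n)%nat -> mv n (proj_dilate P s) y j = s * mv n P y j + y j - mv n P y j.
Proof.
  intros Hj. unfold mv, proj_dilate, proj_compl.
  rewrite (sumR_ext n _ (fun k => s * (P j k * y k) + idm j k * y k + - (P j k * y k))) by (intros; ring).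
  rewrite !sumR_plus, sumR_scal_l, sumR_opp, sumR_idm_l by auto. ring.
Qed.

Lemma proj_dilate_solve s y z : s <> 0 -> (forall j, (j < n)%nat -> mv n (proj_dilate P s) y j = z j) ->
  forall j, (j < n)%nat -> y j = z j - mv n P z j + mv n P z j / s.
Proof.
  intros Hs H j Hj.
  assert (HPz : forall j, (j < n)%nat -> mv n P z j = s * mv n P y j).
  { intros k Hk. rewrite (mv_ext n P z (fun i => s * mv n P y i + y i - mv n P y i))
      by (intros; rewrite <- H, mv_proj_dilate; auto).
    unfold mv at 1. rewrite (sumR_ext n _ (fun i => s * (P k i * mv n P y i) + P k i * y i + - (P k i * mv n P y i))) by (intros; ring).
    rewrite !sumR_plus, sumR_scal_l, sumR_opp. change (s * mv n P (mv n P y) k + mv n P y k + - mv n P (mv n P y) k = s * mv n P y k).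
    rewrite mv_idem; auto. ring. }
  specialize (H j Hj). rewrite mv_proj_dilate in H; auto. rewrite HPz, <- H; auto. field. auto.
Qed.

Lemma proj_factor (M H : Mat) s : s <> 0 ->
  (forall i j, (i < n)%nat -> (j < n)%nat -> mm n M P i j = s * H i j) ->
  forall i j, (i < n)%nat -> (j < n)%nat ->
  M i j = mm n (fun i j => mm n M (proj_compl P) i j + H i j) (proj_dilate P s) i j.
Proof.
  intros Hs HH i j Hi Hj. unfold proj_dilate.
  rewrite mm_plus_l, !mm_plus_r, !mm_scal_r, !mm_assoc.
  rewrite (mm_eq0_r n M (mm n (proj_compl P) P)) by (auto; intros; apply mm_proj_compl_l; auto).
  rewrite (mm_ext_r n M (mm n (proj_compl P) (proj_compl P)) (proj_compl P)) by (auto; intros; apply proj_compl_idem; auto).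
  assert (HMP : forall a b, (a < n)%nat -> (b < n)%nat -> mm n (fun i j => s * H i j) P a b = mm n M P a b).
  { intros a b Ha Hb. rewrite (mm_ext_l n _ (mm n M P)) by (auto; intros; rewrite HH; auto).
    rewrite mm_assoc. apply mm_ext_r; [exact HP|auto]. }
  assert (E1 : s * mm n H P i j = mm n M P i j) by (rewrite <- mm_scal_l; apply HMP; auto).
  assert (E2 : mm n H (proj_compl P) i j = 0).
  { apply (Rmult_eq_reg_l s); auto. rewrite Rmult_0_r, <- mm_scal_l.
    rewrite (mm_ext_l n _ (mm n M P)) by (auto; intros; rewrite HH; auto).
    rewrite mm_assoc. apply mm_eq0_r; auto. intros; apply mm_proj_compl_r; auto. }
  rewrite E1, E2. transitivity (mm n M (fun a b => P a b + proj_compl P a b) i j).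
  - rewrite <- (mm_idm_r n M i j Hj) at 1. apply mm_ext_r; auto. intros; unfold proj_compl; ring.
  - rewrite mm_plus_r. ring.
Qed.

End Projector.

Lemma continuity_pt_neq0_near f x : continuity_pt f x -> f x <> 0 ->
  exists e, 0 < e /\ forall y, Rabs (y - x) < e -> f y <> 0.
Proof.
  intros Hc Hn. destruct (Hc (Rabs (f x) / 2)) as [d [Hd H]]; [apply Rabs_pos_lt in Hn; lra|].
  exists d. split; auto. intros y Hy Hfy. destruct (Req_dec y x) as [->|Hne]; auto.
  specialize (H y (conj (conj I (not_eq_sym Hne)) Hy)). simpl in H. unfold R_dist in H.
  rewrite Hfy, Rminus_0_l, Rabs_Ropp in H. apply Rabs_pos_lt in Hn. lra.
Qed.

Lemma continuity_pt_bounded_near f x : continuity_pt f x ->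
  exists e, 0 < e /\ forall y, Rabs (y - x) < e -> Rabs (f y) <= Rabs (f x) + 1.
Proof.
  intros Hc. destruct (Hc 1) as [d [Hd H]]; [lra|].
  exists d. split; auto. intros y Hy. destruct (Req_dec y x) as [->|Hne]; [lra|].
  specialize (H y (conj (conj I (not_eq_sym Hne)) Hy)). simpl in H. unfold R_dist in H.
  pose proof (Rabs_triang_inv (f y) (f x)). lra.
Qed.

Lemma locally'_of_Rabs x (P : R -> Prop) e : 0 < e ->
  (forall y, y <> x -> Rabs (y - x) < e -> P y) -> locally' x P.
Proof. intros He H. exists (mkposreal e He). intros y Hy Hne. apply H; auto. Qed.

Lemma is_lim_punctured f h (x : R) e : continuity_pt h x -> 0 < e ->
  (forall y, y <> x -> Rabs (y - x) < e -> f y = h y) -> is_lim f x (h x).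
Proof.
  intros Hh He Hfh. apply (is_lim_ext_loc h f); [|apply is_lim_continuity; auto].
  apply (locally'_of_Rabs x _ e He). intros; symmetry; auto.
Qed.

Lemma continuity_pt_punctured_eq f h x e : continuity_pt f x -> continuity_pt h x -> 0 < e ->
  (forall y, y <> x -> Rabs (y - x) < e -> f y = h y) -> f x = h x.
Proof.
  intros Hf Hh He Hfh.
  pose proof (is_lim_unique _ _ _ (is_lim_punctured f h x e Hh He Hfh)) as E1.
  pose proof (is_lim_unique _ _ _ (is_lim_continuity f x Hf)) as E2.
  rewrite E1 in E2. injection E2. auto.
Qed.

Lemma continuity_pt_of_is_lim f (x : R) : is_lim f x (f x) -> continuity_pt f x.
Proof. intros H. apply continuity_pt_filterlim'. exact H. Qed.

Lemma continuity_pt_vnorm n (W : R -> Vec) x :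
  (forall i, (i < n)%nat -> continuity_pt (fun t => W t i) x) -> continuity_pt (fun t => vnorm n (W t)) x.
Proof.
  intros H. apply (continuity_pt_comp (fun t => dot n (W t) (W t)) sqrt).
  - apply (continuity_pt_sumR n (fun i t => W t i * W t i)). intros i Hi.
    apply (continuity_pt_mult (fun t => W t i) (fun t => W t i)); auto.
  - apply continuity_pt_sqrt, dot_self_ge0.
Qed.

Lemma continuity_pt_div_vnorm n c (W : R -> Vec) x :
  (forall i, (i < n)%nat -> continuity_pt (fun t => W t i) x) -> 0 < vnorm n (W x) ->
  continuity_pt (fun t => c / vnorm n (W t)) x.
Proof.
  intros H Hx. apply (continuity_pt_div (fun _ => c) (fun t => vnorm n (W t))); [|apply continuity_pt_vnorm; auto|lra].
  apply continuity_pt_const. intros ? ?; reflexivity.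
Qed.

Lemma Ropen_ball_inter I x e : Ropen I -> Ropen (fun t => Rabs (t - x) < e /\ I t).
Proof.
  intros HI y [Hy HIy]. destruct (HI y HIy) as [e1 [He1 H1]].
  exists (Rmin e1 (e - Rabs (y - x))). split; [apply Rmin_pos; lra|].
  intros z Hz. pose proof (Rmin_l e1 (e - Rabs (y - x))). pose proof (Rmin_r e1 (e - Rabs (y - x))).
  split; [|apply H1; lra].
  replace (z - x) with ((z - y) + (y - x)) by ring. pose proof (Rabs_triang (z - y) (y - x)). lra.
Qed.

Lemma pole_blowup ts b c K e (Q : R -> R -> Prop) : c <> 0 -> 0 < K -> 0 < e ->
  (forall t x, Q t x -> 0 < Rabs (t - ts) < e -> Rabs (b + c / (t - ts)) <= K * x) ->
  forall M, exists delta, 0 < delta /\ forall t x, Q t x -> 0 < Rabs (t - ts) < delta -> M < x.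
Proof.
  intros Hc HK He HQ M.
  set (L := K * Rabs M + Rabs b + 1).
  assert (HL : 0 < L) by (unfold L; pose proof (Rabs_pos M); pose proof (Rabs_pos b); nra).
  assert (Hcp : 0 < Rabs c) by (apply Rabs_pos_lt; auto).
  exists (Rmin e (Rabs c / L)). split; [apply Rmin_pos; auto; apply Rdiv_lt_0_compat; auto|].
  intros t x Hx [Hpos Hlt].
  pose proof (Rmin_l e (Rabs c / L)). pose proof (Rmin_r e (Rabs c / L)).
  assert (Hbig : L < Rabs (c / (t - ts))).
  { rewrite Rabs_div by (intro E; rewrite E, Rabs_R0 in Hpos; lra).
    apply Rlt_div_r; [lra|].
    pose proof (proj2 (Rlt_div_r (Rabs (t - ts)) (Rabs c) L HL) ltac:(lra)). lra. }
  assert (Hte : Rabs (t - ts) < e) by lra. specialize (HQ t x Hx (conj Hpos Hte)).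
  pose proof (Rabs_triang_inv (c / (t - ts)) (- b)) as Htri. rewrite Rabs_Ropp in Htri.
  replace (c / (t - ts) - - b) with (b + c / (t - ts)) in Htri by ring.
  assert (HKx : K * Rabs M < K * x) by (unfold L in Hbig; lra).
  apply Rmult_lt_reg_l in HKx; auto. pose proof (Rle_abs M). lra.
Qed.

Lemma perp_ker_of_invstar n M v w : is_invstar n M v w -> perp_ker n M v.
Proof.
  intros Hw x Hx. rewrite (dot_ext n v (mv n (tr M) w) x x) by (auto; intros; rewrite Hw; auto).
  rewrite dot_sym, <- dot_tr. apply dot_eq0_l. auto.
Qed.

(** * Lagrange tensors *)

Section Lagrange.
Variables (n : nat) (I : R -> Prop) (t0 : R) (Rc A Ad Add : R -> Mat) (v : Vec).
Hypothesis HI : is_open_interval I.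
Hypothesis Ht0 : I t0.
Hypothesis HRc : forall i j, (i < n)%nat -> (j < n)%nat -> smooth_on I (fun t => Rc t i j).
Hypothesis HA : forall i j, (i < n)%nat -> (j < n)%nat -> smooth_on I (fun t => A t i j).
Hypothesis HdA : forall t i j, I t -> (i < n)%nat -> (j < n)%nat ->
  derivable_pt_lim (fun s => A s i j) t (Ad t i j).
Hypothesis HdAd : forall t i j, I t -> (i < n)%nat -> (j < n)%nat ->
  derivable_pt_lim (fun s => Ad s i j) t (Add t i j).
Hypothesis Hjac : forall t i j, I t -> (i < n)%nat -> (j < n)%nat ->
  Add t i j + mm n (Rc t) (A t) i j = 0.
Hypothesis Hker0 : forall x, in_ker n (A t0) x -> in_ker n (Ad t0) x ->
  forall i, (i < n)%nat -> x i = 0.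
Hypothesis Hlag : forall t x y, I t ->
  dot n (mv n (Ad t) x) (mv n (A t) y) = dot n (mv n (A t) x) (mv n (Ad t) y).

Lemma A_smooth i j : (i < n)%nat -> (j < n)%nat -> smooth I (fun t => A t i j).
Proof. intros. apply smooth_of_smooth_on; [apply open_interval_Ropen|apply HA]; auto. Qed.

Lemma kernels_trivial t x : I t -> in_ker n (A t) x -> in_ker n (Ad t) x ->
  forall i, (i < n)%nat -> x i = 0.
Proof.
  intros Ht H1 H2. assert (HRc' : forall i j, (i < n)%nat -> (j < n)%nat -> smooth I (fun t => Rc t i j)).
  { intros. apply smooth_of_smooth_on; [apply open_interval_Ropen|apply HRc]; auto. }
  apply Hker0; apply (jacobi_kernel_transport n I Rc A Ad Add HI HRc' HdA HdAd Hjac x t t0); auto.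
Qed.

Lemma invstar_smooth_regular (W : R -> Vec) :
  (forall t, I t -> invertible n (A t) -> is_invstar n (A t) v (W t)) ->
  forall i, (i < n)%nat -> smooth_on (fun t => I t /\ invertible n (A t)) (fun t => W t i).
Proof.
  intros HW i Hi. apply (smooth_on_of_smooth _ _ (fun t => cramer n (A t) v i)).
  - apply smooth_cramer; auto.
    + intros. apply (smooth_subset I); [apply A_smooth; auto|tauto].
    + intros t [_ Ht]. apply invertible_mxdet; auto.
  - intros t [Ht Hinv]. apply invstar_eq_cramer; auto. apply invertible_mxdet; auto.
Qed.

(* The paper's [g_v] at regular points; junk (a division by [mxdet = 0]) at singular ones. *)
Definition gv (t : R) : R := vnorm n v ^ 2 / vnorm n (cramer n (A t) v).

Section Singular.
Variables (ts : R) (P : Mat) (H : R -> Mat).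
Hypothesis Hts : I ts.
Hypothesis HAP : forall i j, (i < n)%nat -> (j < n)%nat -> mm n (A ts) P i j = 0.
Hypothesis HP : mx_idem n P.
Hypothesis HPker : forall x, in_ker n (A ts) x -> forall i, (i < n)%nat -> mv n P x i = x i.
Hypothesis HHs : forall i j, (i < n)%nat -> (j < n)%nat -> smooth I (fun t => H t i j).
Hypothesis HHfac : forall t i j, I t -> (i < n)%nat -> (j < n)%nat -> mm n (A t) P i j = (t - ts) * H t i j.
Hypothesis HHts : forall i j, (i < n)%nat -> (j < n)%nat -> H ts i j = mm n (Ad ts) P i j.

(* [A t = Bfac t (proj_dilate P (t - ts))] off [ts], where [Bfac] is smooth
   and, by the Lagrange condition, [Bfac ts] is invertible. *)
Definition Bfac (t : R) : Mat := fun i j => mm n (A t) (proj_compl P) i j + H t i j.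

Lemma Bfac_smooth i j : (i < n)%nat -> (j < n)%nat -> smooth I (fun t => Bfac t i j).
Proof.
  intros Hi Hj. apply smooth_plus; auto.
  apply (smooth_sumR I n (fun k t => A t i k * proj_compl P k j)). intros k Hk.
  apply smooth_mult; [apply A_smooth; auto|apply smooth_const].
Qed.

Lemma A_Bfac t i j : I t -> t <> ts -> (i < n)%nat -> (j < n)%nat ->
  A t i j = mm n (Bfac t) (proj_dilate P (t - ts)) i j.
Proof. intros Ht Hne. apply (proj_factor n P HP (A t) (H t)); [lra|auto]. Qed.

Lemma mv_Bfac_ts x i : (i < n)%nat ->
  mv n (Bfac ts) x i = mv n (A ts) (mv n (proj_compl P) x) i + mv n (Ad ts) (mv n P x) i.
Proof.
  intros Hi. rewrite <- !mv_mm. unfold mv. rewrite <- sumR_plus. apply sumR_ext. intros k Hk.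
  unfold Bfac. rewrite HHts by auto. ring.
Qed.

Lemma Bfac_ts_injective x : in_ker n (Bfac ts) x -> forall i, (i < n)%nat -> x i = 0.
Proof.
  intros Hx. set (y := mv n P x). set (z := mv n (proj_compl P) x).
  assert (Hzy : forall i, (i < n)%nat -> mv n (Ad ts) y i = - mv n (A ts) z i).
  { intros i Hi. pose proof (Hx i Hi) as E. rewrite mv_Bfac_ts in E by auto. fold y z in E. lra. }
  assert (Hy : in_ker n (A ts) y).
  { intros i Hi. unfold y. rewrite <- mv_mm. apply sumR_eq0. intros k Hk. rewrite HAP; auto. ring. }
  (* |A' y|^2 = - <A' y, A z> = - <A y, A' z> = 0 *)
  assert (HAdy : in_ker n (Ad ts) y).
  { intros i Hi. apply (dot_self_eq0 n); auto.
    rewrite (dot_ext n _ (fun k => - mv n (A ts) z k) _ (mv n (Ad ts) y)) by auto.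
    rewrite dot_opp_l, dot_sym, Hlag by auto. rewrite dot_eq0_l by auto. ring. }
  assert (Hz : in_ker n (A ts) z).
  { intros i Hi. rewrite <- (Ropp_involutive (mv n (A ts) z i)), <- Hzy, HAdy by auto. ring. }
  assert (Hy0 : forall i, (i < n)%nat -> y i = 0) by (apply (kernels_trivial ts); auto).
  assert (Hz0 : forall i, (i < n)%nat -> z i = 0).
  { intros i Hi. rewrite <- (HPker z Hz i Hi). unfold z. rewrite <- mv_mm.
    apply sumR_eq0. intros k Hk. rewrite mm_proj_compl_r; auto. ring. }
  intros i Hi. rewrite <- (mv_idm n x i Hi).
  transitivity (y i + z i); [|rewrite Hy0, Hz0; auto; ring].
  unfold y, z, mv. rewrite <- sumR_plus. apply sumR_ext. intros k Hk. unfold proj_compl. ring.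
Qed.

Lemma regular_near_ts : exists e, 0 < e /\ forall t, Rabs (t - ts) < e ->
  I t /\ mxdet n (Bfac t) <> 0 /\ (t <> ts -> mxdet n (A t) <> 0).
Proof.
  assert (HB : smooth I (fun t => mxdet n (Bfac t))) by (apply mxdet_smooth; intros; apply Bfac_smooth; auto).
  destruct (continuity_pt_neq0_near _ ts (smooth_continuous I _ ts HB Hts)) as [e1 [He1 H1]].
  { apply mxdet_neq0_of_injective, Bfac_ts_injective. }
  destruct (open_interval_Ropen I HI ts Hts) as [e2 [He2 H2]].
  exists (Rmin e1 e2). split; [apply Rmin_pos; auto|].
  intros t Ht. pose proof (Rmin_l e1 e2). pose proof (Rmin_r e1 e2).
  assert (HIt : I t) by (apply H2; lra). assert (HBt : mxdet n (Bfac t) <> 0) by (apply H1; lra).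
  split; [|split]; auto. intros Hne. apply mxdet_neq0_of_injective. intros x Hx.
  assert (HDx : forall i, (i < n)%nat -> mv n (proj_dilate P (t - ts)) x i = 0).
  { apply (in_ker_invertible n (Bfac t)); [apply invertible_of_mxdet; auto|].
    intros i Hi. rewrite <- (mv_factor n (A t)); auto. intros; apply A_Bfac; auto. }
  intros i Hi. rewrite (proj_dilate_solve n P HP (t - ts) x (fun _ => 0)); auto; [|lra].
  replace (mv n P (fun _ => 0) i) with 0 by (symmetry; apply sumR_eq0; intros; ring). field. lra.
Qed.

Lemma perp_ker_iff_proj : perp_ker n (A ts) v <-> forall j, (j < n)%nat -> mv n (tr P) v j = 0.
Proof.
  split.
  - intros Hp j Hj. rewrite <- (Hp (fun i => P i j)); [apply sumR_ext; intros; unfold tr; ring|].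
    intros i Hi. apply HAP; auto.
  - intros H0 x Hx. rewrite (dot_ext n v v x (mv n P x)) by (auto; intros; rewrite HPker; auto).
    rewrite dot_sym, dot_tr, dot_sym. apply dot_eq0_l. auto.
Qed.

Lemma invstar_Bfac t w : I t -> t <> ts -> is_invstar n (A t) v w ->
  forall j, (j < n)%nat -> mv n (tr (Bfac t)) w j = v j - mv n (tr P) v j + mv n (tr P) v j / (t - ts).
Proof.
  intros Ht Hne Hw. apply (proj_dilate_solve n (tr P) (mx_idem_tr n P HP) (t - ts)); [lra|].
  intros j Hj. rewrite <- (Hw j Hj), (mv_tr_factor n (A t) (Bfac t) (proj_dilate P (t - ts)))
    by (auto; intros; apply A_Bfac; auto).
  apply sumR_ext. intros. rewrite tr_proj_dilate. reflexivity.
Qed.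

Lemma invstar_A_of_Bfac t w : I t -> t <> ts -> (forall j, (j < n)%nat -> mv n (tr P) v j = 0) ->
  is_invstar n (Bfac t) v w -> is_invstar n (A t) v w.
Proof.
  intros Ht Hne Hp Hw j Hj.
  rewrite (mv_tr_factor n (A t) (Bfac t) (proj_dilate P (t - ts))) by (auto; intros; apply A_Bfac; auto).
  rewrite (mv_ext n _ _ v Hw). transitivity (mv n (proj_dilate (tr P) (t - ts)) v j).
  - apply sumR_ext. intros. rewrite tr_proj_dilate. reflexivity.
  - rewrite mv_proj_dilate, Hp by (auto; apply mx_idem_tr; auto). ring.
Qed.

Lemma cramer_Bfac_smooth e : (forall t, Rabs (t - ts) < e -> mxdet n (Bfac t) <> 0) ->
  forall i, (i < n)%nat -> smooth (fun t => Rabs (t - ts) < e /\ I t) (fun t => cramer n (Bfac t) v i).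
Proof.
  intros He i Hi. apply smooth_cramer; auto.
  - intros. apply (smooth_subset I); [apply Bfac_smooth; auto|tauto].
  - intros t [Ht _]. auto.
Qed.

Lemma extension_iff_perp : ~ invertible n (A ts) ->
  (exists eps (U : R -> Vec), 0 < eps /\
     (forall i, (i < n)%nat -> smooth_on (fun t => Rabs (t - ts) < eps /\ I t) (fun t => U t i)) /\
     (forall t, Rabs (t - ts) < eps -> I t -> invertible n (A t) -> is_invstar n (A t) v (U t)))
  <-> perp_ker n (A ts) v.
Proof.
  intros Hsing. destruct regular_near_ts as [e [He Hreg]]. split.
  - intros [eps [U [Heps [HUs HUi]]]].
    assert (HUc : forall i, (i < n)%nat -> continuity_pt (fun t => U t i) ts).
    { intros i Hi. apply (smooth_continuous (fun t => Rabs (t - ts) < eps /\ I t)).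
      - apply smooth_of_smooth_on; [apply Ropen_ball_inter, open_interval_Ropen|apply HUs]; auto.
      - rewrite Rminus_diag, Rabs_R0. auto. }
    apply (perp_ker_of_invstar n (A ts) v (U ts)). intros i Hi.
    apply (continuity_pt_punctured_eq (fun t => mv n (tr (A t)) (U t) i) (fun _ => v i) ts (Rmin e eps)).
    + apply (continuity_pt_sumR n (fun k t => A t k i * U t k)). intros k Hk.
      apply (continuity_pt_mult (fun t => A t k i) (fun t => U t k)); auto.
      apply (smooth_continuous I); auto. apply A_smooth; auto.
    + apply continuity_pt_const. intros ? ?; reflexivity.
    + apply Rmin_pos; auto.
    + intros y Hne Hy. pose proof (Rmin_l e eps). pose proof (Rmin_r e eps).
      destruct (Hreg y ltac:(lra)) as [HIy [_ HAy]].
      apply HUi; auto; [lra|]. apply invertible_mxdet; auto.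
  - intros Hp. exists e, (fun t => cramer n (Bfac t) v). split; auto. split.
    + intros i Hi. apply (smooth_on_of_smooth _ _ (fun t => cramer n (Bfac t) v i)); auto.
      apply cramer_Bfac_smooth; auto. apply Hreg.
    + intros t Ht HIt Hinv. assert (Hne : t <> ts) by (intros ->; auto).
      apply invstar_A_of_Bfac; auto; [apply perp_ker_iff_proj; auto|]. apply cramer_invstar, Hreg; auto.
Qed.

Lemma is_lim_gv_perp : (exists i, (i < n)%nat /\ v i <> 0) -> perp_ker n (A ts) v ->
  exists l, 0 < l /\ is_lim gv ts l.
Proof.
  intros Hv Hp. destruct regular_near_ts as [e [He Hreg]].
  set (U := fun t => cramer n (Bfac t) v).
  assert (Hts_e : Rabs (ts - ts) < e) by (rewrite Rminus_diag, Rabs_R0; auto).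
  assert (HU0 : 0 < vnorm n (U ts)).
  { apply vnorm_gt0, (invstar_nonzero n (Bfac ts) v); auto. apply cramer_invstar, Hreg; auto. }
  exists (vnorm n v ^ 2 / vnorm n (U ts)). split.
  - apply Rdiv_lt_0_compat; auto. pose proof (vnorm_gt0 n v Hv). nra.
  - apply (is_lim_punctured gv (fun t => vnorm n v ^ 2 / vnorm n (U t)) ts e); auto.
    + apply continuity_pt_div_vnorm; auto. intros i Hi.
      apply (smooth_continuous (fun t => Rabs (t - ts) < e /\ I t)); auto.
      apply cramer_Bfac_smooth; auto. apply Hreg.
    + intros y Hne Hy. destruct (Hreg y Hy) as [HIy [HBy HAy]]. unfold gv. f_equal.
      apply vnorm_ext. intros i Hi. symmetry. apply invstar_eq_cramer; auto.
      apply invstar_A_of_Bfac; auto; [apply perp_ker_iff_proj; auto|]. apply cramer_invstar; auto.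
Qed.

Lemma invstar_blowup : ~ perp_ker n (A ts) v ->
  forall M, exists delta, 0 < delta /\ forall t w, I t -> 0 < Rabs (t - ts) < delta ->
    invertible n (A t) -> is_invstar n (A t) v w -> M < vnorm n w.
Proof.
  intros Hnp M.
  assert (Hj : exists j, (j < n)%nat /\ mv n (tr P) v j <> 0).
  { apply Classical_Prop.NNPP. intros Hno. apply Hnp, perp_ker_iff_proj. intros j Hj.
    apply Classical_Prop.NNPP. intros Hc. apply Hno. eauto. }
  destruct Hj as [j [Hj Hc]].
  set (Bsum := fun t => sumR n (fun k => Rabs (Bfac t k j))).
  destruct (continuity_pt_bounded_near Bsum ts) as [e [He HB]].
  { apply (continuity_pt_sumR n (fun k t => Rabs (Bfac t k j))). intros k Hk.
    apply (continuity_pt_comp (fun t => Bfac t k j) Rabs); [|apply Rcontinuity_abs].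
    apply (smooth_continuous I); auto. apply Bfac_smooth; auto. }
  destruct (pole_blowup ts (v j - mv n (tr P) v j) (mv n (tr P) v j) (Rabs (Bsum ts) + 1) e
    (fun t x => exists w, x = vnorm n w /\ I t /\ is_invstar n (A t) v w)) with (M := M)
    as [delta [Hdelta Hdel]]; auto.
  - pose proof (Rabs_pos (Bsum ts)). lra.
  - intros t x [w [-> [Ht Hw]]] [Hpos Hlt].
    assert (Hne : t <> ts) by (intros ->; rewrite Rminus_diag, Rabs_R0 in Hpos; lra).
    replace (v j - mv n (tr P) v j + mv n (tr P) v j / (t - ts)) with (mv n (tr (Bfac t)) w j)
      by (apply invstar_Bfac; auto).
    eapply Rle_trans; [apply (Rabs_lincomb_le n (fun k => Bfac t k j) w)|].
    apply Rmult_le_compat_r; [apply vnorm_ge0|]. pose proof (Rle_abs (Bsum t)). specialize (HB t Hlt). unfold Bsum in *. lra.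
  - exists delta. split; auto. intros t w Ht Htd _ Hw. apply (Hdel t); eauto.
Qed.

Lemma is_lim_gv_nonperp : ~ perp_ker n (A ts) v -> is_lim gv ts 0.
Proof.
  intros Hnp. destruct regular_near_ts as [e [He Hreg]]. apply is_lim_spec. intros eps.
  destruct (invstar_blowup Hnp (vnorm n v ^ 2 / eps)) as [delta [Hd Hdel]].
  apply (locally'_of_Rabs ts _ (Rmin e delta)); [apply Rmin_pos; auto|].
  intros y Hne Hy. pose proof (Rmin_l e delta). pose proof (Rmin_r e delta).
  destruct (Hreg y ltac:(lra)) as [HIy [HBy HAy]]. specialize (HAy Hne).
  assert (Hw := Hdel y (cramer n (A y) v) HIy).
  assert (0 < Rabs (y - ts)) by (apply Rabs_pos_lt; lra).
  specialize (Hw ltac:(lra) (proj2 (invertible_mxdet n _) HAy) (cramer_invstar n _ v HAy)).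
  pose proof (cond_pos eps) as Heps.
  assert (0 <= vnorm n v ^ 2 / eps) by (apply Rdiv_le_0_compat; [apply pow2_ge_0|lra]).
  unfold gv. rewrite Rminus_0_r, Rabs_pos_eq by (apply Rdiv_le_0_compat; [apply pow2_ge_0|lra]).
  assert (0 < vnorm n (cramer n (A y) v)) by lra.
  apply Rlt_div_l in Hw; [|lra]. apply Rlt_div_l; lra.
Qed.

End Singular.

Lemma singular_data ts : I ts -> exists P (H : R -> Mat),
  (forall i j, (i < n)%nat -> (j < n)%nat -> mm n (A ts) P i j = 0) /\ mx_idem n P /\
  (forall x, in_ker n (A ts) x -> forall i, (i < n)%nat -> mv n P x i = x i) /\
  (forall i j, (i < n)%nat -> (j < n)%nat -> smooth I (fun t => H t i j)) /\
  (forall t i j, I t -> (i < n)%nat -> (j < n)%nat -> mm n (A t) P i j = (t - ts) * H t i j) /\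
  (forall i j, (i < n)%nat -> (j < n)%nat -> H ts i j = mm n (Ad ts) P i j).
Proof.
  intros Hts. destruct (kernel_projector n (A ts)) as [P [HAP [HP HPker]]].
  assert (Hq : forall ij : nat * nat, exists h : R -> R, (fst ij < n)%nat -> (snd ij < n)%nat ->
    smooth I h /\ (forall t, I t -> mm n (A t) P (fst ij) (snd ij) = (t - ts) * h t) /\
    h ts = mm n (Ad ts) P (fst ij) (snd ij)).
  { intros [i j]; simpl. destruct (Nat.lt_ge_cases i n) as [Hi|Hi]; [|exists (fun _ => 0); lia].
    destruct (Nat.lt_ge_cases j n) as [Hj|Hj]; [|exists (fun _ => 0); lia].
    assert (Hf : smooth I (fun t => mm n (A t) P i j)).
    { apply (smooth_sumR I n (fun k t => A t i k * P k j)). intros k Hk.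
      apply smooth_mult; [apply A_smooth; auto|apply smooth_const]. }
    destruct (hadamard I ts _ HI Hts Hf (HAP i j Hi Hj)) as [h [Hhs [Hheq Hhd]]].
    exists h. intros _ _. split; [|split]; auto.
    apply (uniqueness_limite (fun t => mm n (A t) P i j) ts); auto.
    apply (derivable_pt_lim_sumR n (fun k t => A t i k * P k j)). intros k Hk.
    apply (derivable_pt_lim_eq _ _ (Ad ts i k * P k j + A ts i k * 0)); [|ring].
    apply (derivable_pt_lim_mult (fun t => A t i k) (fun _ => P k j)); [apply HdA; auto|apply derivable_pt_lim_const]. }
  destruct (choice _ Hq) as [h Hh].
  exists P, (fun t i j => h (i, j) t). split; [|split; [|split; [|split; [|split]]]]; auto.
  - intros i j Hi Hj. apply (Hh (i, j) Hi Hj).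
  - intros t i j Ht Hi Hj. apply (Hh (i, j) Hi Hj), Ht.
  - intros i j Hi Hj. apply (Hh (i, j) Hi Hj).
Qed.

Lemma regular_punctured_nbhd t : I t ->
  exists e, 0 < e /\ forall y, y <> t -> Rabs (y - t) < e -> I y /\ mxdet n (A y) <> 0.
Proof.
  intros Ht. destruct (singular_data t Ht) as [P [H [HAP [HP [HPker [HHs [HHfac HHts]]]]]]].
  edestruct (regular_near_ts t P H) as [e [He Hreg]]; eauto.
  exists e. split; auto. intros y Hne Hy. destruct (Hreg y Hy) as [HIy [_ HAy]]; auto.
Qed.

Lemma extension_iff_perp_at ts : I ts -> ~ invertible n (A ts) ->
  (exists eps (U : R -> Vec), 0 < eps /\
     (forall i, (i < n)%nat -> smooth_on (fun t => Rabs (t - ts) < eps /\ I t) (fun t => U t i)) /\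
     (forall t, Rabs (t - ts) < eps -> I t -> invertible n (A t) -> is_invstar n (A t) v (U t)))
  <-> perp_ker n (A ts) v.
Proof.
  intros Hts. destruct (singular_data ts Hts) as [P [H [HAP [HP [HPker [HHs [HHfac HHts]]]]]]].
  eapply extension_iff_perp; eauto.
Qed.

Lemma invstar_blowup_at ts : I ts -> ~ perp_ker n (A ts) v ->
  forall M, exists delta, 0 < delta /\ forall t w, I t -> 0 < Rabs (t - ts) < delta ->
    invertible n (A t) -> is_invstar n (A t) v w -> M < vnorm n w.
Proof.
  intros Hts. destruct (singular_data ts Hts) as [P [H [HAP [HP [HPker [HHs [HHfac HHts]]]]]]].
  eapply invstar_blowup; eauto.
Qed.

Hypothesis Hv : exists i, (i < n)%nat /\ v i <> 0.

Lemma is_lim_gv_regular t : I t -> mxdet n (A t) <> 0 -> is_lim gv t (gv t).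
Proof.
  intros Ht Hd. apply is_lim_continuity.
  assert (HdA_s : smooth I (fun t => mxdet n (A t))) by (apply mxdet_smooth; intros; apply A_smooth; auto).
  destruct (continuity_pt_neq0_near _ t (smooth_continuous I _ t HdA_s Ht) Hd) as [e [He He']].
  apply continuity_pt_div_vnorm.
  - intros i Hi. apply (smooth_continuous (fun y => Rabs (y - t) < e /\ I y)).
    + apply smooth_cramer; auto; [|intros y [Hy _]; auto].
      intros. apply (smooth_subset I); [apply A_smooth; auto|tauto].
    + rewrite Rminus_diag, Rabs_R0. auto.
  - apply vnorm_gt0, (invstar_nonzero n (A t) v); auto. apply cramer_invstar; auto.
Qed.

Lemma gv_limit t : I t -> exists l : R, is_lim gv t l /\ (0 < l <-> perp_ker n (A t) v).
Proof.
  intros Ht. destruct (singular_data t Ht) as [P [H [HAP [HP [HPker [HHs [HHfac HHts]]]]]]].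
  destruct (Classical_Prop.classic (perp_ker n (A t) v)) as [Hp|Hnp].
  - edestruct (is_lim_gv_perp t P H) as [l [Hl Hlim]]; eauto. exists l. tauto.
  - exists 0. split; [eapply is_lim_gv_nonperp; eauto|]. split; [intros; lra|tauto].
Qed.

(* [Lim] is the punctured limit, so [gv_ext] only differs from [gv] at singular points. *)
Definition gv_ext (t : R) : R := real (Lim gv t).

Lemma gv_ext_limit t : I t -> is_lim gv t (gv_ext t) /\ (0 < gv_ext t <-> perp_ker n (A t) v).
Proof. intros Ht. destruct (gv_limit t Ht) as [l [Hl Hiff]]. unfold gv_ext. rewrite (is_lim_unique _ _ _ Hl). auto. Qed.

Lemma gv_ext_continuous t : I t -> continuity_pt gv_ext t.
Proof.
  intros Ht. apply continuity_pt_of_is_lim.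
  destruct (regular_punctured_nbhd t Ht) as [e [He Hreg]].
  apply (is_lim_ext_loc gv); [|apply gv_ext_limit; auto].
  apply (locally'_of_Rabs t _ e He). intros y Hne Hy. destruct (Hreg y Hne Hy) as [HIy HAy].
  unfold gv_ext. rewrite (is_lim_unique _ _ _ (is_lim_gv_regular y HIy HAy)). reflexivity.
Qed.

Lemma gv_ext_regular t w : I t -> invertible n (A t) -> is_invstar n (A t) v w ->
  gv_ext t = vnorm n v ^ 2 / vnorm n w.
Proof.
  intros Ht Hinv Hw. apply invertible_mxdet in Hinv.
  unfold gv_ext. rewrite (is_lim_unique _ _ _ (is_lim_gv_regular t Ht Hinv)). simpl. unfold gv. f_equal.
  apply vnorm_ext. intros i Hi. symmetry. apply invstar_eq_cramer; auto.
Qed.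

Lemma gv_ext_nonperp ts : I ts -> ~ perp_ker n (A ts) v -> gv_ext ts = 0.
Proof.
  intros Hts Hnp. destruct (singular_data ts Hts) as [P [H [HAP [HP [HPker [HHs [HHfac HHts]]]]]]].
  unfold gv_ext. rewrite (is_lim_unique gv ts 0); [reflexivity|]. eapply is_lim_gv_nonperp; eauto.
Qed.

End Lagrange.

Theorem proposition1p3
  (n : nat) (I : R -> Prop) (t0 : R)
  (Rc : R -> Mat)            (* curvature operator R_t in a parallel frame *)
  (A Ad Add : R -> Mat)      (* Jacobi tensor A_t, A_t', A_t'' *)
  (v : Vec) :
  is_open_interval I -> I t0 ->
  (* R_t smooth and self-adjoint *)
  (forall i j, (i < n)%nat -> (j < n)%nat -> smooth_on I (fun t => Rc t i j)) ->
  (forall t i j, I t -> (i < n)%nat -> (j < n)%nat -> Rc t i j = Rc t j i) ->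
  (* A is a smooth Jacobi tensor *)
  (forall i j, (i < n)%nat -> (j < n)%nat -> smooth_on I (fun t => A t i j)) ->
  (forall t i j, I t -> (i < n)%nat -> (j < n)%nat ->
     derivable_pt_lim (fun s => A s i j) t (Ad t i j)) ->
  (forall t i j, I t -> (i < n)%nat -> (j < n)%nat ->
     derivable_pt_lim (fun s => Ad s i j) t (Add t i j)) ->
  (forall t i j, I t -> (i < n)%nat -> (j < n)%nat ->
     Add t i j + mm n (Rc t) (A t) i j = 0) ->
  (* Lagrange conditions *)
  (forall x, in_ker n (A t0) x -> in_ker n (Ad t0) x ->
     forall i, (i < n)%nat -> x i = 0) ->
  (forall t x y, I t ->
     dot n (mv n (Ad t) x) (mv n (A t) y) = dot n (mv n (A t) x) (mv n (Ad t) y)) ->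
  (* (a) *)
  ((forall W : R -> Vec,
      (forall t, I t -> invertible n (A t) -> is_invstar n (A t) v (W t)) ->
      forall i, (i < n)%nat ->
        smooth_on (fun t => I t /\ invertible n (A t)) (fun t => W t i))
   /\
   (forall ts, I ts -> ~ invertible n (A ts) ->
      ((exists eps (U : R -> Vec), 0 < eps /\
          (forall i, (i < n)%nat ->
             smooth_on (fun t => Rabs (t - ts) < eps /\ I t) (fun t => U t i)) /\
          (forall t, Rabs (t - ts) < eps -> I t -> invertible n (A t) ->
             is_invstar n (A t) v (U t)))
       <-> perp_ker n (A ts) v)))
  /\
  (* (b) *)
  ((exists i, (i < n)%nat /\ v i <> 0) ->
   exists G : R -> R,
     (forall t, I t -> continuity_pt G t) /\
     (forall t w, I t -> invertible n (A t) -> is_invstar n (A t) v w ->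
        G t = (vnorm n v) ^ 2 / vnorm n w) /\
     (forall ts, I ts -> ~ invertible n (A ts) -> ~ perp_ker n (A ts) v ->
        G ts = 0 /\
        (forall M, exists delta, 0 < delta /\
           forall t w, I t -> 0 < Rabs (t - ts) < delta -> invertible n (A t) ->
             is_invstar n (A t) v w -> M < vnorm n w)) /\
     (forall t, I t -> (0 < G t <-> perp_ker n (A t) v))).
Proof.
  intros HI Ht0 HRc _ HA HdA HdAd Hjac Hker0 Hlag.
  split; [split|].
  - apply (invstar_smooth_regular n I A v); auto.
  - intros ts Hts Hsing. apply (extension_iff_perp_at n I t0 Rc A Ad Add); auto.
  - intros Hv. exists (gv_ext n A v). split; [|split; [|split]].
    + intros t Ht. apply (gv_ext_continuous n I t0 Rc A Ad Add); auto.
    + intros t w Ht Hinv Hw. apply (gv_ext_regular n I A); auto.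
    + intros ts Hts _ Hnp. split.
      * apply (gv_ext_nonperp n I t0 Rc A Ad Add); auto.
      * apply (invstar_blowup_at n I A Ad); auto.
    + intros t Ht. apply (gv_ext_limit n I t0 Rc A Ad Add); auto.
Qed.
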